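(* Let $(G,E,\phi_c)$ be any twisted Exel–Pardo tuple. Then the canonical algebra homomorphism $L(E)\to L(G,E,\phi_c)$, sending $v\mapsto v$, $e\mapsto e$, $e^*\mapsto e^*$ for $v\in E^0$, $e\in E^1$, is injective.
   Context: $\ell$ is a commutative unital ring, $\mathcal U(\ell)$ its unit group. A twisted Exel–Pardo tuple $(G,E,\phi_c)$: a graph $E=(E^0,E^1,r,s)$, a group $G$ acting on $E$ by graph automorphisms, $\phi:G\times E^1\to G$ with $\phi(gh,e)=\phi(g,h(e))\phi(h,e)$ and $\phi(g,e)(v)=g(v)$ for $v\in E^0$, and $c:G\times E^1\to\mathcal U(\ell)$ with $c(gh,e)=c(g,h(e))c(h,e)$. A vertex $v$ is regular if $0<|s^{-1}(v)|<\infty$. $L(G,E,\phi_c)$ is the $\ell$-algebra generated by $e,e^*$ ($e\in E^1$), $vg$ ($v\in E^0,g\in G$), $v:=v1$, subject to $e=s(e)er(e)$, $e^*=r(e)e^*s(e)$, $e^*f=\delta_{e,f}r(e)$, $(vg)(wh)=\delta_{v,g(w)}v(gh)$, $(vg)e=\delta_{v,g(s(e))}c(g,e)g(e)(r(g(e))\phi(g,e))$, $e^*(vg)=\delta_{v,s(e)}c(g,g^{-1}(e))(r(e)\phi(g,g^{-1}(e)))(g^{-1}(e))^*$, and $v=\sum_{s(e)=v}ee^*$ for every regular $v$. $L(E)$ is the Leavitt path algebra of $E$ over $\ell$. *)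

From mathcomp Require Import all_boot all_algebra.
From Stdlib Require List.
Set Implicit Arguments. Unset Strict Implicit. Unset Printing Implicit Defensive.
Import GRing.Theory.
Local Open Scope ring_scope.

Section FreeAlg.
Variable R : comPzRingType.

Inductive fexpr (X : Type) : Type :=
| fvar : X -> fexpr X
| fzero : fexpr X
| fadd : fexpr X -> fexpr X -> fexpr X
| fscale : R -> fexpr X -> fexpr X
| fmul : fexpr X -> fexpr X -> fexpr X.

Arguments fzero {X}.

Fixpoint fmap (X Y : Type) (f : X -> Y) (a : fexpr X) : fexpr Y :=
  match a with
  | fvar x => fvar (f x)
  | fzero => fzero
  | fadd a b => fadd (fmap f a) (fmap f b)
  | fscale r a => fscale r (fmap f a)
  | fmul a b => fmul (fmap f a) (fmap f b)
  end.

Definition fsum (X I : Type) (l : list I) (F : I -> fexpr X) : fexpr X :=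
  foldr (fun i acc => fadd (F i) acc) fzero l.

Inductive fcong (X : Type) (rels : fexpr X -> fexpr X -> Prop)
  : fexpr X -> fexpr X -> Prop :=
| fc_rel a b : rels a b -> fcong rels a b
| fc_refl a : fcong rels a a
| fc_sym a b : fcong rels a b -> fcong rels b a
| fc_trans a b c : fcong rels a b -> fcong rels b c -> fcong rels a c
| fc_add a a' b b' : fcong rels a a' -> fcong rels b b' ->
    fcong rels (fadd a b) (fadd a' b')
| fc_scale r a a' : fcong rels a a' -> fcong rels (fscale r a) (fscale r a')
| fc_mul a a' b b' : fcong rels a a' -> fcong rels b b' ->
    fcong rels (fmul a b) (fmul a' b')
| fc_addA a b c : fcong rels (fadd a (fadd b c)) (fadd (fadd a b) c)
| fc_addC a b : fcong rels (fadd a b) (fadd b a)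
| fc_add0 a : fcong rels (fadd fzero a) a
| fc_addN a : fcong rels (fadd (fscale (-1) a) a) fzero
| fc_scale1 a : fcong rels (fscale 1 a) a
| fc_scaleA r s a : fcong rels (fscale r (fscale s a)) (fscale (r * s) a)
| fc_scaleDr r a b :
    fcong rels (fscale r (fadd a b)) (fadd (fscale r a) (fscale r b))
| fc_scaleDl r s a :
    fcong rels (fscale (r + s) a) (fadd (fscale r a) (fscale s a))
| fc_mulA a b c : fcong rels (fmul a (fmul b c)) (fmul (fmul a b) c)
| fc_mulDl a b c : fcong rels (fmul (fadd a b) c) (fadd (fmul a c) (fmul b c))
| fc_mulDr a b c : fcong rels (fmul a (fadd b c)) (fadd (fmul a b) (fmul a c))
| fc_scalel r a b : fcong rels (fmul (fscale r a) b) (fscale r (fmul a b))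
| fc_scaler r a b : fcong rels (fmul a (fscale r b)) (fscale r (fmul a b)).

End FreeAlg.
Arguments fzero {R X}.
Arguments fvar {R X}.
Arguments fadd {R X}.
Arguments fscale {R X}.
Arguments fmul {R X}.

Record graph := Graph {
  vert : Type;
  edge : Type;
  rg : edge -> vert;
  sg : edge -> vert
}.

Record group := Group {
  gcar :> Type;
  gmul : gcar -> gcar -> gcar;
  gone : gcar;
  ginv : gcar -> gcar;
  gmulA : forall x y z, gmul x (gmul y z) = gmul (gmul x y) z;
  gmul1 : forall x, gmul x gone = x;
  g1mul : forall x, gmul gone x = x;
  gmulV : forall x, gmul x (ginv x) = gone;
  gVmul : forall x, gmul (ginv x) x = gone
}.

(* v is regular: 0 < |s^{-1}(v)| < oo; witnessed by a duplicate-free,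
   nonempty list enumerating exactly s^{-1}(v). *)
Definition enumerates_fiber (E : graph) (v : vert E) (l : list (edge E)) :=
  l <> nil /\ List.NoDup l /\ (forall e, List.In e l <-> sg e = v).

Definition regular (E : graph) (v : vert E) :=
  exists l, enumerates_fiber v l.

Record twisted_EP (l : comPzRingType) := TwistedEP {
  epG : group;
  epE : graph;
  actv : epG -> vert epE -> vert epE;
  acte : epG -> edge epE -> edge epE;
  actv1 : forall v, actv (gone epG) v = v;
  actvM : forall g h v, actv (gmul g h) v = actv g (actv h v);
  acte1 : forall e, acte (gone epG) e = e;
  acteM : forall g h e, acte (gmul g h) e = acte g (acte h e);
  act_r : forall g e, rg (acte g e) = actv g (rg e);
  act_s : forall g e, sg (acte g e) = actv g (sg e);
  phi : epG -> edge epE -> epG;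
  phi_cocycle : forall g h e,
      phi (gmul g h) e = gmul (phi g (acte h e)) (phi h e);
  phi_vert : forall g e v, actv (phi g e) v = actv g v;
  cc : epG -> edge epE -> l;
  cc_unit : forall g e, exists u, cc g e * u = 1;
  cc_cocycle : forall g h e, cc (gmul g h) e = cc g (acte h e) * cc h e
}.

Inductive LE_gen (E : graph) : Type :=
| LEv : vert E -> LE_gen E
| LEe : edge E -> LE_gen E
| LEs : edge E -> LE_gen E.

Inductive LE_rel (l : comPzRingType) (E : graph)
  : fexpr l (LE_gen E) -> fexpr l (LE_gen E) -> Prop :=
| LEr_vv v : LE_rel (fmul (fvar (LEv v)) (fvar (LEv v))) (fvar (LEv v))
| LEr_vw v w : v <> w -> LE_rel (fmul (fvar (LEv v)) (fvar (LEv w))) fzero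
| LEr_se e : LE_rel (fmul (fvar (LEv (sg e))) (fvar (LEe e))) (fvar (LEe e))
| LEr_er e : LE_rel (fmul (fvar (LEe e)) (fvar (LEv (rg e)))) (fvar (LEe e))
| LEr_rs e : LE_rel (fmul (fvar (LEv (rg e))) (fvar (LEs e))) (fvar (LEs e))
| LEr_ss e : LE_rel (fmul (fvar (LEs e)) (fvar (LEv (sg e)))) (fvar (LEs e))
| LEr_ee e : LE_rel (fmul (fvar (LEs e)) (fvar (LEe e))) (fvar (LEv (rg e)))
| LEr_ef e f : e <> f -> LE_rel (fmul (fvar (LEs e)) (fvar (LEe f))) fzero
| LEr_CK2 v ls : enumerates_fiber v ls ->
    LE_rel (fvar (LEv v))
           (fsum ls (fun e => fmul (fvar (LEe e)) (fvar (LEs e)))).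

Section LG.
Variables (l : comPzRingType) (T : twisted_EP l).
Local Notation G := (epG T).
Local Notation E := (epE T).

Inductive LG_gen : Type :=
| LGe : edge E -> LG_gen
| LGs : edge E -> LG_gen
| LGvg : vert E -> G -> LG_gen.

Local Notation X := (fexpr l LG_gen).
Definition xv (v : vert E) : X := fvar (LGvg v (gone G)).
Definition xvg (v : vert E) (g : G) : X := fvar (LGvg v g).
Definition xe (e : edge E) : X := fvar (LGe e).
Definition xs (e : edge E) : X := fvar (LGs e).

Inductive LG_rel : X -> X -> Prop :=
| LGr_e e : LG_rel (xe e) (fmul (fmul (xv (sg e)) (xe e)) (xv (rg e)))
| LGr_s e : LG_rel (xs e) (fmul (fmul (xv (rg e)) (xs e)) (xv (sg e)))
| LGr_ee e : LG_rel (fmul (xs e) (xe e)) (xv (rg e))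
| LGr_ef e f : e <> f -> LG_rel (fmul (xs e) (xe f)) fzero
| LGr_vgwh (v : vert E) (g : G) (w : vert E) (h : G) : v = actv g w ->
    LG_rel (fmul (xvg v g) (xvg w h)) (xvg v (gmul g h))
| LGr_vgwh0 (v : vert E) (g : G) (w : vert E) (h : G) : v <> actv g w ->
    LG_rel (fmul (xvg v g) (xvg w h)) fzero
| LGr_vge (v : vert E) (g : G) (e : edge E) : v = actv g (sg e) ->
    LG_rel (fmul (xvg v g) (xe e))
           (fscale (cc g e)
              (fmul (xe (acte g e))
                    (xvg (rg (acte g e)) (phi g e))))
| LGr_vge0 (v : vert E) (g : G) (e : edge E) : v <> actv g (sg e) ->
    LG_rel (fmul (xvg v g) (xe e)) fzero
| LGr_svg (e : edge E) (v : vert E) (g : G) : v = sg e ->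
    LG_rel (fmul (xs e) (xvg v g))
           (fscale (cc g (acte (ginv g) e))
              (fmul (xvg (rg e) (phi g (acte (ginv g) e)))
                    (xs (acte (ginv g) e))))
| LGr_svg0 (e : edge E) (v : vert E) (g : G) : v <> sg e ->
    LG_rel (fmul (xs e) (xvg v g)) fzero
| LGr_CK2 v ls : enumerates_fiber v ls ->
    LG_rel (xv v) (fsum ls (fun e => fmul (xe e) (xs e))).

Definition canon_gen (x : LE_gen E) : LG_gen :=
  match x with
  | LEv v => LGvg v (gone G)
  | LEe e => LGe e
  | LEs e => LGs e
  end.

Definition canon (a : fexpr l (LE_gen E)) : X := fmap canon_gen a.

End LG.

From Stdlib Require Import ClassicalEpsilon FunctionalExtensionality ZArith Lia Permutation Setoid Morphisms.
From mathcomp Require Import all_boot all_algebra.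
From mathcomp Require Import ring zify.
Set Implicit Arguments. Unset Strict Implicit. Unset Printing Implicit Defensive.
Import GRing.Theory.
Local Open Scope ring_scope.

(* The defining relations of L(E) are relations of L(G,E,phi_c) with g = 1,
   so the map is well defined.  For injectivity, L(G,E,phi_c) acts on formal
   combinations of states (a, w, h, n) -- a path a ending at w, a group element
   h and an integer degree n: e prepends e, e^* deletes a leading e (or, at a
   vertex, passes through h as in the relation for e^* vg and absorbs the
   resulting ghost edge), and vg moves the path by the self-similar action of
   g, weighted by the cocycle c.  The Cuntz-Krieger relation at a regular
   vertex only holds after expanding states along the fibre
   w h = sum_f c(h,f) h(f) phi(h,f) f^*, so combinations are identified when
   they agree after expansion to some finite depth; expansion commutes with
   all generators.  If an element of L(E) acts as zero, write it as a sum of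
   monomials r a w b^* and induct on the total length of the paths a:
   multiplying by s(e_0) and by the e^* separates the terms, (CK2) reassembles
   them at a regular vertex, and at a singular vertex an edge starting none of
   the paths isolates the terms w b^*.  Those are detected by the state
   (reversed b, w, 1, 0), whose expansion keeps an invertible coefficient
   because c takes unit values. *)

(* Vertices, edges and group elements come without decidable equality, so
   case distinctions on them are made classically. *)
Definition dec (P : Prop) : bool := if excluded_middle_informative P then true else false.

Lemma decT (P : Prop) : P -> dec P = true.
Proof. by rewrite /dec; case: excluded_middle_informative. Qed.
Lemma decF (P : Prop) : ~ P -> dec P = false.
Proof. by rewrite /dec; case: excluded_middle_informative. Qed.
Lemma decP (P : Prop) : reflect P (dec P).
Proof. rewrite /dec; case: excluded_middle_informative => H; by constructor. Qed.

Definition nodupP (A : Type) : seq A -> seq A :=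
  List.nodup (fun x y : A => excluded_middle_informative (x = y)).

Lemma nodupP_In (A : Type) (s : seq A) x : List.In x (nodupP s) <-> List.In x s.
Proof. exact: List.nodup_In. Qed.
Lemma NoDup_nodupP (A : Type) (s : seq A) : List.NoDup (nodupP s).
Proof. exact: List.NoDup_nodup. Qed.

Lemma NoDup_map_inj (A B : Type) (f : A -> B) (s : seq A) :
  injective f -> List.NoDup s -> List.NoDup (map f s).
Proof. by move=> Hf; apply: List.NoDup_map_NoDup_ForallPairs => x y _ _ /Hf. Qed.

Lemma In_filter (A : Type) (P : pred A) (s : seq A) x :
  List.In x (filter P s) <-> List.In x s /\ P x.
Proof. exact: List.filter_In. Qed.

Lemma count_In_gt0 (A : Type) (P : pred A) (s : seq A) x :
  List.In x s -> P x -> (0 < count P s)%N.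
Proof. elim: s => //= y s IH [<-|H] Hx; first by rewrite Hx. have := IH H Hx. lia. Qed.

#[export] Hint Resolve fc_refl : core.

Section PresentedAlgebra.
Variables (R : comPzRingType) (X : Type) (rels : fexpr R X -> fexpr R X -> Prop).
Local Notation "a =f= b" := (fcong rels a b) (at level 70).

#[export] Instance fcong_equiv : Equivalence (fcong rels).
Proof. split; [exact: fc_refl|exact: fc_sym|exact: fc_trans]. Qed.
#[export] Instance fcong_rewrite : RewriteRelation (fcong rels). Qed.
#[export] Instance fadd_proper : Proper (fcong rels ==> fcong rels ==> fcong rels) (@fadd R X).
Proof. by move=> a a' H b b' H'; apply: fc_add. Qed.
#[export] Instance fmul_proper : Proper (fcong rels ==> fcong rels ==> fcong rels) (@fmul R X).
Proof. by move=> a a' H b b' H'; apply: fc_mul. Qed.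
#[export] Instance fscale_proper r : Proper (fcong rels ==> fcong rels) (@fscale R X r).
Proof. by move=> a a' H; apply: fc_scale. Qed.

Lemma fadd0 a : fadd a fzero =f= a.
Proof. by rewrite fc_addC fc_add0. Qed.
Lemma fscale0 a : fscale 0 a =f= fzero.
Proof.
have -> : (0 : R) = -1 + 1 by rewrite addNr.
by rewrite fc_scaleDl fc_scale1 fc_addN.
Qed.
Lemma fscale_zero r : fscale r (@fzero R X) =f= fzero.
Proof. rewrite -{1}(fscale0 fzero) fc_scaleA mulr0. exact: fscale0. Qed.
Lemma fmul0l a : fmul fzero a =f= fzero.
Proof. rewrite -{1}(fscale0 fzero) fc_scalel. exact: fscale0. Qed.
Lemma fmul0r a : fmul a fzero =f= fzero.
Proof. rewrite -{1}(fscale0 fzero) fc_scaler. exact: fscale0. Qed.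
Lemma fsub0_eq a b : fadd a (fscale (-1) b) =f= fzero -> a =f= b.
Proof. move=> H. by rewrite -(fadd0 a) -(fc_addN rels b) fc_addA H fc_add0. Qed.
Lemma faddKr a b : fadd (fadd a b) (fscale (-1) a) =f= b.
Proof. by rewrite fc_addC fc_addA fc_addN fc_add0. Qed.

Variable I : Type.
Implicit Types (L : seq I) (A B : I -> fexpr R X).

Lemma fsum_ext L A B : (forall i, List.In i L -> A i =f= B i) -> fsum L A =f= fsum L B.
Proof.
elim: L => //= i L IH H. rewrite H; last by left.
by rewrite IH // => j Hj; apply: H; right.
Qed.
Lemma fsum0 L A : (forall i, List.In i L -> A i =f= fzero) -> fsum L A =f= fzero.
Proof.
move=> H. rewrite (fsum_ext H). clear H. elim: L => //= i L IH. by rewrite IH fc_add0.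
Qed.
Lemma fsumD L A B : fsum L (fun i => fadd (A i) (B i)) =f= fadd (fsum L A) (fsum L B).
Proof.
elim: L => /= [|i L IH]; first by rewrite fc_add0.
rewrite IH -!fc_addA. apply: fc_add => //. rewrite !fc_addA.
apply: fc_add => //. exact: fc_addC.
Qed.
Lemma fsumZ L r A : fsum L (fun i => fscale r (A i)) =f= fscale r (fsum L A).
Proof.
elim: L => /= [|i L IH]; first by rewrite fscale_zero.
by rewrite IH fc_scaleDr.
Qed.
Lemma fsum_mull L A b : fmul (fsum L A) b =f= fsum L (fun i => fmul (A i) b).
Proof.
elim: L => /= [|i L IH]; first exact: fmul0l.
by rewrite fc_mulDl IH.
Qed.
Lemma fsum_single L A i0 : List.NoDup L -> List.In i0 L ->
  (forall i, List.In i L -> i <> i0 -> A i =f= fzero) -> fsum L A =f= A i0.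
Proof.
elim: L => //= i L IH Hn Hin H. inversion Hn; subst.
case: Hin => [E|Hin].
  subst i. rewrite fsum0 ?fadd0 // => j Hj. apply: H; first by right.
  by move=> E; subst.
rewrite H; first by rewrite fc_add0 IH // => j Hj; apply: H; right.
- by left.
- by move=> E; subst.
Qed.

End PresentedAlgebra.

(** * Formal linear combinations *)

Section Combinations.
Variables (R : comPzRingType) (S : Type).

(* Finite formal R-linear combinations of elements of S, compared through
   their coefficient functions. *)
Definition comb := seq (R * S).
Implicit Types (F H : comb) (A B : S -> comb).

Definition coef F (y : S) : R :=
  foldr (fun p acc => (if dec (p.2 = y) then p.1 else 0) + acc) 0 F.
Definition scalec (r : R) F : comb := map (fun p => (r * p.1, p.2)) F.
Definition lin A F : comb := flatten (map (fun p => scalec p.1 (A p.2)) F).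
Definition ceq F H := forall y, coef F y = coef H y.
Definition lsum F (t : S -> R) : R := foldr (fun p acc => p.1 * t p.2 + acc) 0 F.

Lemma coef_cat F H y : coef (F ++ H) y = coef F y + coef H y.
Proof. by elim: F => /= [|p F IH]; rewrite ?add0r // IH addrA. Qed.
Lemma coef_scalec r F y : coef (scalec r F) y = r * coef F y.
Proof.
elim: F => /= [|p F IH]; first by rewrite mulr0.
by rewrite IH mulrDr; case: decP => _; rewrite ?mulr0.
Qed.
Lemma lin_cat A F H : lin A (F ++ H) = lin A F ++ lin A H.
Proof. by rewrite /lin map_cat flatten_cat. Qed.
Lemma lin_cons A r x F : lin A ((r, x) :: F) = scalec r (A x) ++ lin A F.
Proof. by []. Qed.
Lemma lin_nil A : lin A [::] = [::]. Proof. by []. Qed.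
Lemma lin0 F : lin (fun _ => [::]) F = [::].
Proof. by elim: F. Qed.
Lemma coef_lin A F y : coef (lin A F) y = lsum F (fun x => coef (A x) y).
Proof. elim: F => //= [[r x] F IH]. by rewrite lin_cons coef_cat coef_scalec IH. Qed.
Lemma coef_notin F z : (forall p, List.In p F -> p.2 <> z) -> coef F z = 0.
Proof.
elim: F => //= p F IH H. rewrite decF; first by rewrite add0r IH // => q Hq; apply: H; right.
by apply: H; left.
Qed.

Lemma ceq_sym F H : ceq F H -> ceq H F. Proof. by move=> E y. Qed.
Lemma ceq_trans F H K : ceq F H -> ceq H K -> ceq F K.
Proof. by move=> E1 E2 y; rewrite E1. Qed.
Lemma ceq_cat F F' H H' : ceq F F' -> ceq H H' -> ceq (F ++ H) (F' ++ H').
Proof. by move=> E1 E2 y; rewrite !coef_cat E1 E2. Qed.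
Lemma ceq_scalec r F F' : ceq F F' -> ceq (scalec r F) (scalec r F').
Proof. by move=> E y; rewrite !coef_scalec E. Qed.

Definition ssum (I : Type) (s : seq I) (f : I -> R) : R := foldr (fun x acc => f x + acc) 0 s.
Lemma ssumD (I : Type) (s : seq I) f g : ssum s (fun x => f x + g x) = ssum s f + ssum s g.
Proof. elim: s => /= [|x s IH]; first by rewrite addr0. rewrite IH. ring. Qed.
Lemma ssum_single (I : Type) (s : seq I) (t : I -> R) i0 : List.NoDup s -> List.In i0 s ->
  (forall i, List.In i s -> i <> i0 -> t i = 0) -> ssum s t = t i0.
Proof.
elim: s => //= i s IH Hn Hin H. inversion Hn; subst.
case: Hin => [E|Hin]; last by rewrite H ?add0r ?IH //; [move=> j Hj; apply: H; right|left|move=> E; subst].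
subst i. rewrite (_ : ssum s t = 0) ?addr0 //.
elim: s {IH Hn H3} H2 H => //= j s IHs Hj H. rewrite H; last 2 first.
- by right; left.
- by move=> E; apply: Hj; left.
rewrite add0r IHs //; first by move=> Hj'; apply: Hj; right.
move=> k Hk; apply: H. by case: Hk => [->|Hk]; [left|right; right].
Qed.
Lemma ssum_delta s x0 (t : S -> R) : List.NoDup s ->
  ssum s (fun x => if dec (x0 = x) then t x else 0) = if dec (List.In x0 s) then t x0 else 0.
Proof.
move=> Hn; case: (decP (List.In x0 s)) => Hin.
  by rewrite (ssum_single Hn Hin) ?decT // => x _ Hx; rewrite decF // => E; apply: Hx.
elim: s Hn Hin => //= x s IH Hn Hin. inversion Hn; subst.
rewrite decF; first by rewrite add0r IH // => H; apply: Hin; right.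
by move=> E; apply: Hin; left.
Qed.
Lemma lsum_supp F t s : List.NoDup s -> (forall p, List.In p F -> List.In p.2 s) ->
  lsum F t = ssum s (fun x => coef F x * t x).
Proof.
move=> Hn; elim: F => /= [|[r x0] F IH] HF.
  by clear HF Hn; elim: s => //= x s IH; rewrite mul0r add0r.
rewrite IH; last by move=> p Hp; apply: HF; right.
have -> : (fun x => ((if dec (x0 = x) then r else 0) + coef F x) * t x) =
  (fun x => (if dec (x0 = x) then r * t x else 0) + coef F x * t x).
  by apply: functional_extensionality => x; rewrite mulrDl; case: decP; rewrite ?mul0r.
rewrite ssumD ssum_delta // decT //. by have := HF (r, x0); apply; left.
Qed.
Lemma lsum_ceq F H t : ceq F H -> lsum F t = lsum H t.
Proof.
move=> E. pose s := nodupP (map snd (F ++ H)).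
have Hs : forall p, List.In p (F ++ H) -> List.In p.2 s.
  by move=> p Hp; rewrite nodupP_In; apply: List.in_map.
rewrite (@lsum_supp F t s (NoDup_nodupP _)); last first.
  by move=> p Hp; apply: Hs; apply: List.in_or_app; left.
rewrite (@lsum_supp H t s (NoDup_nodupP _)); last first.
  by move=> p Hp; apply: Hs; apply: List.in_or_app; right.
by congr ssum; apply: functional_extensionality => x; rewrite E.
Qed.

Lemma ceq_lin A F H : ceq F H -> ceq (lin A F) (lin A H).
Proof. by move=> E y; rewrite !coef_lin; apply: lsum_ceq. Qed.
Lemma lin_ext A B F : (forall x, ceq (A x) (B x)) -> ceq (lin A F) (lin B F).
Proof. move=> E y; rewrite !coef_lin. elim: F => //= p F IH. by rewrite IH E. Qed.
Lemma lin_scalec A r F : ceq (lin A (scalec r F)) (scalec r (lin A F)).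
Proof.
move=> y; rewrite coef_scalec !coef_lin. elim: F => /= [|p F IH]; first by rewrite mulr0.
rewrite IH. ring.
Qed.
Lemma lin_lin A B F : ceq (lin A (lin B F)) (lin (fun x => lin A (B x)) F).
Proof.
elim: F => //= [[r x] F IH]. rewrite !lin_cons lin_cat.
apply: ceq_cat => //. exact: lin_scalec.
Qed.
Lemma lin_single A r x : ceq (lin A [:: (r, x)]) (scalec r (A x)).
Proof. by move=> y; rewrite lin_cons coef_cat /= addr0. Qed.
Lemma lin_single1 A x : ceq (lin A [:: (1, x)]) (A x).
Proof. by move=> y; rewrite lin_single coef_scalec mul1r. Qed.
Lemma lin_unit F : ceq (lin (fun x => [:: (1, x)]) F) F.
Proof. elim: F => //= [[r x] F IH] y. by rewrite lin_cons coef_cat IH /= mulr1 addr0. Qed.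
Lemma lin_id_on A F : (forall p, List.In p F -> A p.2 = [:: (1, p.2)]) -> ceq (lin A F) F.
Proof.
elim: F => //= [[r x] F IH] H y. rewrite lin_cons coef_cat IH; last by move=> p Hp; apply: H; right.
by rewrite (H (r, x)) /=; [rewrite mulr1 addr0|left].
Qed.
Lemma lin_kill A F : (forall p, List.In p F -> A p.2 = [::]) -> lin A F = [::].
Proof.
elim: F => //= p F IH H. rewrite /lin /= H ?[in X in X ++ _]/= ; last by left.
by apply: IH => q Hq; apply: H; right.
Qed.
Lemma lin_add A B F : ceq (lin (fun y => A y ++ B y) F) (lin A F ++ lin B F).
Proof.
move=> y; rewrite coef_cat !coef_lin. elim: F => /= [|p F IH]; first by rewrite addr0.
rewrite IH coef_cat. ring.
Qed.
Lemma lin_scalel A r F : ceq (lin (fun y => scalec r (A y)) F) (scalec r (lin A F)).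
Proof.
move=> y; rewrite coef_scalec !coef_lin. elim: F => /= [|p F IH]; first by rewrite mulr0.
rewrite IH coef_scalec. ring.
Qed.
Lemma in_lin A F p : List.In p (lin A F) ->
  exists q p', [/\ List.In q F, List.In p' (A q.2) & p = (q.1 * p'.1, p'.2)].
Proof.
elim: F => //= [[r x] F IH]. rewrite lin_cons => Hp. case: (List.in_app_or _ _ _ Hp) => H.
  case: (proj1 (List.in_map_iff _ _ _) H) => p' [<- Hp']. by exists (r, x), p'; split => //; left.
case: (IH H) => q' [p' [H1 H2 H3]]. by exists q', p'; split => //; right.
Qed.

Variable I : Type.
Implicit Types (L : seq I) (X Y : I -> comb).

Lemma coef_flat L X z : coef (flatten (map X L)) z = ssum L (fun i => coef (X i) z).
Proof. by elim: L => //= i L IH; rewrite coef_cat IH. Qed.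
Lemma lin_flat A L (c : I -> R) X :
  ceq (lin A (flatten (map (fun i => scalec (c i) (X i)) L)))
      (flatten (map (fun i => scalec (c i) (lin A (X i))) L)).
Proof. elim: L => //= i L IH. rewrite lin_cat. apply: ceq_cat => //. exact: lin_scalec. Qed.
Lemma ceq_flat_in L X Y : (forall i, List.In i L -> ceq (X i) (Y i)) ->
  ceq (flatten (map X L)) (flatten (map Y L)).
Proof.
elim: L => //= i L IH H; apply: ceq_cat; first by apply: H; left.
by apply: IH => j Hj; apply: H; right.
Qed.
Lemma ceq_flat L X Y : (forall i, ceq (X i) (Y i)) -> ceq (flatten (map X L)) (flatten (map Y L)).
Proof. by move=> H; apply: ceq_flat_in. Qed.
Lemma flat_nil L X : (forall i, List.In i L -> ceq (X i) [::]) -> ceq (flatten (map X L)) [::].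
Proof.
elim: L => //= i L IH H y. rewrite coef_cat H ?IH //=; first by rewrite addr0.
  by move=> j Hj; apply: H; right.
by left.
Qed.
Lemma flat_single L (P : I -> Prop) X i0 : List.NoDup L -> List.In i0 L ->
  (forall i, P i <-> i = i0) -> ceq (flatten (map (fun i => if dec (P i) then X i else [::]) L)) (X i0).
Proof.
move=> Hn Hin HP. elim: L Hn Hin => //= i L IH Hn Hin. inversion Hn; subst.
case: Hin => [Hi|Hin]; last by rewrite decF; [apply: IH|rewrite HP => E; subst].
subst i; rewrite decT ?HP // => y. rewrite coef_cat flat_nil ?addr0 // => j Hj.
by rewrite decF // HP => E; subst.
Qed.
Lemma scalec_flat a L (b : I -> R) X :
  ceq (scalec a (flatten (map (fun i => scalec (b i) (X i)) L)))
      (flatten (map (fun i => scalec (a * b i) (X i)) L)).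
Proof.
elim: L => //= i L IH y. rewrite coef_scalec !coef_cat !coef_scalec -IH coef_scalec. ring.
Qed.
Lemma in_flat_scalec L (c : I -> R) X p :
  List.In p (flatten (map (fun i => scalec (c i) (X i)) L)) ->
  exists i q, [/\ List.In i L, List.In q (X i) & p = (c i * q.1, q.2)].
Proof.
elim: L => //= i L IH Hin; case: (List.in_app_or _ _ _ Hin) => H.
  case: (proj1 (List.in_map_iff _ _ _) H) => q [<- Hq]. by exists i, q; split => //; left.
case: (IH H) => i' [q [H1 H2 H3]]. by exists i', q; split => //; right.
Qed.
Lemma perm_flat L1 L2 X : Permutation L1 L2 -> ceq (flatten (map X L1)) (flatten (map X L2)).
Proof.
elim=> //=.
- by move=> i L L' _ H; apply: ceq_cat.
- by move=> i i' L y; rewrite !coef_cat; ring.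
- by move=> L L' L'' _ H1 _ H2; apply: ceq_trans H2.
Qed.

End Combinations.

(** * Paths and the self-similar action *)

Section Groups.
Variable G : group.
Implicit Types x y z : G.

Lemma gmulI x : injective (gmul x).
Proof. move=> y z /(f_equal (gmul (ginv x))). by rewrite !gmulA gVmul !g1mul. Qed.
Lemma gmul_idem1 x : gmul x x = x -> x = gone G.
Proof. by move=> H; apply: (@gmulI x); rewrite H gmul1. Qed.
Lemma ginvM x y : ginv (gmul x y) = gmul (ginv y) (ginv x).
Proof.
apply: (@gmulI (gmul x y)). by rewrite gmulV -!gmulA (gmulA y) gmulV g1mul gmulV.
Qed.

End Groups.

Section GraphPaths.
Variable E : graph.
Local Notation V := (vert E).
Local Notation Ed := (edge E).

(* A path e_1 ... e_n is a list with r(e_i) = s(e_{i+1}); it carries its end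
   vertex w explicitly so that vertices are the paths of length zero. *)
Definition path_src (a : seq Ed) (w : V) : V := if a is e :: _ then sg e else w.
Fixpoint is_path (a : seq Ed) (w : V) : Prop :=
  if a is e :: a' then rg e = path_src a' w /\ is_path a' w else True.

Lemma is_path_cats1 a w e : is_path a w -> sg e = w -> is_path (a ++ [:: e]) (rg e).
Proof.
elim: a => /= [|f a IH] Hv He; first by split.
case: Hv => H1 H2; split; last by apply: IH.
by case: a {IH H2} H1 => //=; rewrite He.
Qed.
Lemma path_src_cats1 a w e : sg e = w -> path_src (a ++ [:: e]) (rg e) = path_src a w.
Proof. by case: a. Qed.
Lemma is_path_catr a b w : is_path (a ++ b) w -> is_path b w.
Proof. elim: a => //= e a IH [_ H]. exact: IH. Qed.

(* The word w g_1^* ... g_n^* is not trivially zero. *)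
Fixpoint ghost_path (w : V) (gs : seq Ed) : Prop :=
  if gs is g :: gs' then rg g = w /\ ghost_path (sg g) gs' else True.

Lemma ghost_path_rev w gs : ghost_path w gs -> is_path (rev gs) w.
Proof.
elim: gs w => //= g gs IH w [Hg H]. rewrite rev_cons -cats1 -Hg.
by apply: is_path_cats1 => //; apply: IH.
Qed.

(* The enumeration of s^{-1}(v) chosen once and for all (empty when v is not regular). *)
Definition fib (v : V) : seq Ed :=
  match excluded_middle_informative (regular v) with
  | left H => proj1_sig (constructive_indefinite_description _ H)
  | right _ => [::]
  end.

Lemma fib_enum v : regular v -> enumerates_fiber v (fib v).
Proof.
rewrite /fib; case: excluded_middle_informative => // H _.
by case: constructive_indefinite_description.
Qed.
Lemma fib_sg v f : List.In f (fib v) -> sg f = v.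
Proof.
rewrite /fib; case: excluded_middle_informative => // H.
case: constructive_indefinite_description => /= ls [_ [_ Hin]]. by move/Hin.
Qed.
Lemma fib_nodup v : List.NoDup (fib v).
Proof.
rewrite /fib; case: excluded_middle_informative => [H|_]; last by constructor.
by case: constructive_indefinite_description => /= ls [_ [Hn _]].
Qed.
Lemma fib_in v f : regular v -> sg f = v -> List.In f (fib v).
Proof. by move=> /fib_enum [_ [_ H]] Hf; apply/H. Qed.

Lemma singular_fresh_edge v (Hd : seq Ed) e0 : ~ regular v -> sg e0 = v ->
  (forall f, List.In f Hd -> sg f = v) -> exists e, sg e = v /\ ~ List.In e Hd.
Proof.
move=> Hr He0 HH. apply: NNPP => Hn. apply: Hr. exists (nodupP Hd).
have Hall : forall e, sg e = v -> List.In e Hd.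
  move=> e He. apply: NNPP => Hne. apply: Hn. by exists e.
split; last split.
- have : List.In e0 (nodupP Hd) by rewrite nodupP_In; apply: Hall.
  by case: (nodupP Hd).
- exact: NoDup_nodupP.
- move=> e. rewrite nodupP_In. split; [exact: HH|exact: Hall].
Qed.

End GraphPaths.

Section SelfSimilarAction.
Variables (l : comPzRingType) (T : twisted_EP l).
Local Notation G := (epG T).
Local Notation E := (epE T).
Local Notation V := (vert E).
Local Notation Ed := (edge E).
Local Notation g1 := (gone G).
Implicit Types (g h : G) (v w : V) (e f : Ed) (a : seq Ed).

Lemma phi1 e : phi g1 e = g1.
Proof. apply: gmul_idem1. by rewrite -{3}(g1mul g1) phi_cocycle acte1. Qed.
Lemma cc1 e : cc g1 e = 1.
Proof.
have H : cc g1 e = cc g1 e * cc g1 e by rewrite -{1}(g1mul g1) cc_cocycle acte1.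
have [u Hu] := cc_unit g1 e.
by have := f_equal (fun x => x * u) H; rewrite /= -mulrA Hu mulr1.
Qed.

Lemma actvK g : cancel (actv g) (actv (ginv g)).
Proof. by move=> v; rewrite -actvM gVmul actv1. Qed.
Lemma actvKV g : cancel (actv (ginv g)) (actv g).
Proof. by move=> v; rewrite -actvM gmulV actv1. Qed.
Lemma acteK g : cancel (acte g) (acte (ginv g)).
Proof. by move=> e; rewrite -acteM gVmul acte1. Qed.
Lemma acteKV g : cancel (acte (ginv g)) (acte g).
Proof. by move=> e; rewrite -acteM gmulV acte1. Qed.
Lemma actv_inj g : injective (actv g). Proof. exact: can_inj (actvK g). Qed.
Lemma acte_inj g : injective (acte g). Proof. exact: can_inj (acteK g). Qed.

(* The self-similar action g.(e a) = g(e) . phi(g,e)(a) on paths, the group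
   element phi(g, a) it leaves behind, and the accumulated twist c(g, a). *)
Fixpoint pact g a : seq Ed :=
  if a is e :: a' then acte g e :: pact (phi g e) a' else [::].
Fixpoint pphi g a : G :=
  if a is e :: a' then pphi (phi g e) a' else g.
Fixpoint pcoc g a : l :=
  if a is e :: a' then cc g e * pcoc (phi g e) a' else 1.

Lemma pact1 a : pact g1 a = a.
Proof. by elim: a => //= e a IH; rewrite acte1 phi1 IH. Qed.
Lemma pphi1 a : pphi g1 a = g1.
Proof. by elim: a => //= e a IH; rewrite phi1 IH. Qed.
Lemma pcoc1 a : pcoc g1 a = 1.
Proof. by elim: a => //= e a IH; rewrite phi1 IH cc1 mulr1. Qed.
Lemma pactM g h a : pact (gmul g h) a = pact g (pact h a).
Proof. by elim: a g h => //= e a IH g h; rewrite acteM phi_cocycle IH. Qed.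
Lemma pphiM g h a : pphi (gmul g h) a = gmul (pphi g (pact h a)) (pphi h a).
Proof. by elim: a g h => //= e a IH g h; rewrite phi_cocycle IH. Qed.
Lemma pcocM g h a : pcoc (gmul g h) a = pcoc g (pact h a) * pcoc h a.
Proof.
elim: a g h => /= [|e a IH] g h; first by rewrite mulr1.
rewrite phi_cocycle IH cc_cocycle. ring.
Qed.
Lemma pact_cats1 g a e : pact g (a ++ [:: e]) = pact g a ++ [:: acte (pphi g a) e].
Proof. by elim: a g => //= f a IH g; rewrite IH. Qed.
Lemma pphi_cats1 g a e : pphi g (a ++ [:: e]) = phi (pphi g a) e.
Proof. by elim: a g => //= f a IH g; rewrite IH. Qed.
Lemma pcoc_cats1 g a e : pcoc g (a ++ [:: e]) = pcoc g a * cc (pphi g a) e.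
Proof. elim: a g => /= [|f a IH] g; first by rewrite mulr1 mul1r. by rewrite IH mulrA. Qed.
Lemma pphi_vert g a v : actv (pphi g a) v = actv g v.
Proof. by elim: a g => //= e a IH g; rewrite IH phi_vert. Qed.
Lemma size_pact g a : size (pact g a) = size a.
Proof. by elim: a g => //= e a IH g; rewrite IH. Qed.

Lemma path_src_pact g a w : path_src (pact g a) (actv g w) = actv g (path_src a w).
Proof. by case: a => //= e a; rewrite act_s. Qed.
Lemma is_path_pact g a w : is_path a w -> is_path (pact g a) (actv g w).
Proof.
elim: a g => //= e a IH g [H1 H2]; split; last by rewrite -(phi_vert g e w); apply: IH.
by rewrite act_r H1 -(phi_vert g e w) path_src_pact phi_vert.
Qed.

Lemma regular_act g v : regular v -> regular (actv g v).
Proof.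
case=> ls [Hne [Hnd Hin]]. exists (map (acte g) ls); split; last split.
- by case: ls Hne {Hnd Hin}.
- by apply: NoDup_map_inj => //; apply: acte_inj.
- move=> e; split.
    case/List.in_map_iff => f [<- Hf]. by rewrite act_s (proj1 (Hin f) Hf).
  move=> He. apply/List.in_map_iff; exists (acte (ginv g) e); split; first exact: acteKV.
  by apply/Hin; rewrite act_s He actvK.
Qed.
Lemma regular_actE g v : regular (actv g v) <-> regular v.
Proof.
split; last exact: regular_act.
by move=> H; rewrite -(actvK g v); apply: regular_act.
Qed.

End SelfSimilarAction.

(** * A representation of L(G,E,phi_c) on states *)

Section Representation.
Variables (l : comPzRingType) (T : twisted_EP l).
Local Notation G := (epG T).
Local Notation E := (epE T).
Local Notation V := (vert E).
Local Notation Ed := (edge E).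
Local Notation g1 := (gone G).
Local Notation LGX := (fexpr l (LG_gen T)).

(* In a state (a, w, h, n) the degree n counts the edges minus the ghost edges
   applied so far; it only serves to separate homogeneous components. *)
Record state := State { spath : seq Ed; send : V; sgrp : G; sdeg : Z }.
Local Notation comb := (comb l state).

Definition valid (x : state) := is_path (spath x) (send x).
Definition ssrc (x : state) := path_src (spath x) (send x).
Definition smove (g : G) (x : state) : state :=
  State (pact g (spath x)) (actv g (send x)) (gmul (pphi g (spath x)) (sgrp x)) (sdeg x).

Lemma state_eta x : State (spath x) (send x) (sgrp x) (sdeg x) = x. Proof. by case: x. Qed.
Lemma valid_smove g x : valid x -> valid (smove g x).
Proof. exact: is_path_pact. Qed.
Lemma ssrc_smove g x : ssrc (smove g x) = actv g (ssrc x).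
Proof. exact: path_src_pact. Qed.

Definition op_e (e : Ed) (x : state) : comb :=
  if dec (valid x /\ rg e = ssrc x)
  then [:: (1, State (e :: spath x) (send x) (sgrp x) (Z.add (sdeg x) 1))] else [::].
(* On a vertex state, e^* w h = c(h,f) r(e) phi(h,f) f^* with f = h^{-1}(e);
   the state keeps c(h,f) r(e) phi(h,f) and absorbs f^*. *)
Definition op_s (e : Ed) (x : state) : comb :=
  if dec (valid x) then
    match spath x with
    | f :: a => if dec (f = e) then [:: (1, State a (send x) (sgrp x) (Z.sub (sdeg x) 1))] else [::]
    | [::] => if dec (sg e = send x /\ regular (send x))
              then [:: (cc (sgrp x) (acte (ginv (sgrp x)) e),
                        State [::] (rg e) (phi (sgrp x) (acte (ginv (sgrp x)) e)) (Z.sub (sdeg x) 1))]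
              else [::]
    end
  else [::].
Definition op_vg (v : V) (g : G) (x : state) : comb :=
  if dec (valid x /\ v = actv g (ssrc x)) then [:: (pcoc g (spath x), smove g x)] else [::].

Lemma op_s_cons e f a w h n : op_s e (State (f :: a) w h n) =
  if dec (valid (State (f :: a) w h n)) then
    (if dec (f = e) then [:: (1, State a w h (Z.sub n 1))] else [::]) else [::].
Proof. by []. Qed.
Lemma op_s_nil e w h n : op_s e (State [::] w h n) =
  if dec (sg e = w /\ regular w)
  then [:: (cc h (acte (ginv h) e), State [::] (rg e) (phi h (acte (ginv h) e)) (Z.sub n 1))]
  else [::].
Proof. by rewrite /op_s decT. Qed.
Lemma op_vg1 v x : op_vg v g1 x = if dec (valid x /\ v = ssrc x) then [:: (1, x)] else [::].
Proof. by rewrite /op_vg /smove actv1 pact1 pcoc1 pphi1 g1mul actv1 state_eta. Qed.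

(* Expansion along the fibre of h^{-1}(w), mirroring
   w h = sum_f c(h,f) h(f) phi(h,f) f^* with f^* absorbed, to depth k. *)
Definition sbase (x : state) : V := actv (ginv (sgrp x)) (send x).
Definition expandable (x : state) : Prop := valid x /\ regular (sbase x).
Definition extend (x : state) (f : Ed) : state :=
  State (spath x ++ [:: acte (sgrp x) f]) (rg (acte (sgrp x) f)) (phi (sgrp x) f) (sdeg x).

Fixpoint expand (k : nat) (x : state) : comb :=
  if k is k'.+1 then
    if dec (expandable x)
    then flatten (map (fun f => scalec (cc (sgrp x) f) (expand k' (extend x f))) (fib (sbase x)))
    else [:: (1, x)]
  else [:: (1, x)].

Lemma ssrc_extend x f : List.In f (fib (sbase x)) -> ssrc (extend x f) = ssrc x.
Proof.
move=> /fib_sg Hf. rewrite /ssrc /extend /=. apply: path_src_cats1.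
by rewrite act_s Hf /sbase actvKV.
Qed.
Lemma valid_extend x f : valid x -> List.In f (fib (sbase x)) -> valid (extend x f).
Proof.
move=> Hv /fib_sg Hf. rewrite /valid /extend /=. apply: is_path_cats1 => //.
by rewrite act_s Hf /sbase actvKV.
Qed.
Lemma sbase_smove g x : sbase (smove g x) = sbase x.
Proof.
rewrite /sbase /= ginvM actvM. congr actv.
by rewrite -(pphi_vert g (spath x) (send x)) actvK.
Qed.
Lemma smove_extend g x f : smove g (extend x f) = extend (smove g x) f.
Proof. by rewrite /extend /smove /= pact_cats1 pphi_cats1 acteM phi_cocycle !act_r pphi_vert. Qed.

Lemma expand_shape k x p : List.In p (expand k x) ->
  [/\ sdeg p.2 = sdeg x, ssrc p.2 = ssrc x, (exists b, spath p.2 = spath x ++ b),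
      (valid x -> valid p.2) & (~ valid x -> p.2 = x)].
Proof.
elim: k x p => [|k IH] x p /=.
  case=> // <-; split=> //; by exists [::]; rewrite cats0.
case: decP => Hx; last by case=> // <-; split=> //; exists [::]; rewrite cats0.
move=> Hp; have [f [q [Hf Hq Hpe]]] := in_flat_scalec Hp; rewrite Hpe /=.
case: (IH _ _ Hq) => H1 H2 [b Hb] H4 H5. split.
- by rewrite H1.
- by rewrite H2 ssrc_extend.
- by exists (acte (sgrp x) f :: b); rewrite Hb /extend /= -catA.
- by move=> Hv; apply: H4; apply: valid_extend.
- by move=> Hv; case: Hv; case: Hx.
Qed.
Lemma expand_guard (Q : V -> Prop) k x p : List.In p (expand k x) ->
  valid p.2 /\ Q (ssrc p.2) -> valid x /\ Q (ssrc x).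
Proof.
case/expand_shape=> _ Hs _ _ Hx [Hv HQ]; case: (decP (valid x)) => Hvx.
  by rewrite -Hs.
by rewrite -(Hx Hvx).
Qed.
Lemma expand_invalid k x : ~ valid x -> expand k x = [:: (1, x)].
Proof. by case: k => //= k H; rewrite decF // => -[]. Qed.
Lemma lin_expand0 F : ceq (lin (expand 0) F) F.
Proof. exact: lin_unit. Qed.

Lemma expand_expand k j x : (k = 0 \/ size (spath x) + k <= j)%N ->
  ceq (lin (fun z => expand (j - size (spath z)) z) (expand k x)) (expand (j - size (spath x)) x).
Proof.
elim: k x => [|k IH] x Hk; first exact: lin_single1.
case: Hk => // Hk.
rewrite [expand k.+1 x]/=. case: decP => Hx; last by apply: lin_single1.
have -> : (j - size (spath x))%N = (j - size (spath x)).-1.+1 by rewrite prednK //; lia.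
rewrite [expand _.+1 x]/= decT //.
apply: ceq_trans; first exact: lin_flat.
apply: ceq_flat => f. apply: ceq_scalec. apply: ceq_trans; first apply: IH.
  by right; rewrite /extend /= size_cat /=; lia.
rewrite /extend /= size_cat /=. by have -> : (j - (size (spath x) + 1))%N = (j - size (spath x)).-1 by lia.
Qed.

Definition expand_to (D : nat) (x : state) : comb := expand (D - size (spath x)) x.
Definition expandc (D : nat) (F : comb) : comb := lin (expand_to D) F.
Definition ckeq (F H : comb) := exists D, ceq (expandc D F) (expandc D H).

Lemma expandc_expandc D D' F : (D <= D')%N -> ceq (expandc D' (expandc D F)) (expandc D' F).
Proof.
move=> HD. apply: ceq_trans; first exact: lin_lin.
apply: lin_ext => x. rewrite /expand_to. apply: expand_expand. lia.
Qed.
Lemma expandc_ceq_up D D' F H : (D <= D')%N ->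
  ceq (expandc D F) (expandc D H) -> ceq (expandc D' F) (expandc D' H).
Proof.
move=> HD E. apply: ceq_trans; first exact: ceq_sym (expandc_expandc F HD).
apply: ceq_trans; first exact: ceq_lin E. exact: expandc_expandc.
Qed.

Lemma ckeq_refl F : ckeq F F. Proof. by exists 0%N. Qed.
Lemma ckeq_sym F H : ckeq F H -> ckeq H F.
Proof. by case=> D E; exists D; apply: ceq_sym. Qed.
Lemma ckeq_trans F H K : ckeq F H -> ckeq H K -> ckeq F K.
Proof.
case=> D1 E1 [D2 E2]; exists (maxn D1 D2).
apply: ceq_trans; first by apply: (expandc_ceq_up _ E1); rewrite leq_maxl.
by apply: (expandc_ceq_up _ E2); rewrite leq_maxr.
Qed.
Lemma ceq_ckeq F H : ceq F H -> ckeq F H.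
Proof. by move=> E; exists 0%N; apply: ceq_lin. Qed.
Lemma ckeq_cat F F' H H' : ckeq F F' -> ckeq H H' -> ckeq (F ++ H) (F' ++ H').
Proof.
case=> D1 E1 [D2 E2]; exists (maxn D1 D2). rewrite /expandc !lin_cat.
by apply: ceq_cat; [apply: (expandc_ceq_up _ E1); rewrite leq_maxl|apply: (expandc_ceq_up _ E2); rewrite leq_maxr].
Qed.
Lemma ckeq_scalec r F H : ckeq F H -> ckeq (scalec r F) (scalec r H).
Proof.
case=> D E; exists D. apply: ceq_trans; first exact: lin_scalec.
apply: ceq_trans; last exact: ceq_sym (lin_scalec _ _ _). exact: ceq_scalec.
Qed.
Lemma ckeq_ceq F F' H H' : ceq F F' -> ceq H H' -> ckeq F' H' -> ckeq F H.
Proof.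
move=> E1 E2 E. apply: ckeq_trans; first exact: ceq_ckeq E1.
apply: ckeq_trans; first exact: E. exact: ceq_ckeq (ceq_sym E2).
Qed.
Lemma lin_ckeq A B : (forall x, ckeq (A x) (B x)) -> forall F, ckeq (lin A F) (lin B F).
Proof.
move=> H; elim=> [|[r x] F IH]; first exact: ckeq_refl.
rewrite !lin_cons; apply: ckeq_cat => //; exact: ckeq_scalec.
Qed.

Lemma expand_op_e e k x : ceq (lin (expand k) (op_e e x)) (lin (op_e e) (expand k x)).
Proof.
elim: k x => [|k IH] x.
  by apply: ceq_trans; [exact: lin_expand0|exact: ceq_sym (lin_single1 _ _)].
rewrite {1}/op_e; case: decP => H; last first.
  by rewrite lin_nil lin_kill // => p /expand_guard Hg; rewrite /op_e decF // => /Hg.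
case: H => Hv Hr.
set x' := State _ _ _ _.
apply: ceq_trans; first exact: lin_single1.
have Hex : expandable x' <-> expandable x.
  rewrite /expandable /valid /sbase /=; split; first by case=> [[_ H1] H2].
  by case=> H1 H2; split => //; split.
rewrite /=; case: (decP (expandable x)) => Hx; last first.
  rewrite decF; last by rewrite Hex.
  apply: ceq_sym; apply: ceq_trans; first exact: lin_single1.
  by rewrite /op_e decT.
rewrite decT; last by rewrite Hex.
apply: ceq_sym; apply: ceq_trans; first exact: lin_flat.
apply: ceq_flat_in => f Hf. apply: ceq_scalec. apply: ceq_trans; first exact: ceq_sym (IH _).
rewrite /op_e decT; first exact: lin_single1.
by split; [apply: valid_extend|rewrite ssrc_extend].
Qed.

Lemma expand_op_vg v g k x : ceq (lin (expand k) (op_vg v g x)) (lin (op_vg v g) (expand k x)).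
Proof.
elim: k x => [|k IH] x.
  by apply: ceq_trans; [exact: lin_expand0|exact: ceq_sym (lin_single1 _ _)].
rewrite {1}/op_vg; case: decP => H; last first.
  by rewrite lin_nil lin_kill // => p /expand_guard Hg; rewrite /op_vg decF // => /(Hg (fun s => v = actv g s)).
case: H => Hv Hvv.
apply: ceq_trans; first exact: lin_single.
have Hex : expandable (smove g x) <-> expandable x.
  rewrite /expandable sbase_smove; split; case=> H1 H2 //; split => //. exact: valid_smove.
rewrite [expand k.+1 (smove g x)]/= [expand k.+1 x]/=.
case: (decP (expandable x)) => Hx; last first.
  rewrite decF; last by rewrite Hex.
  apply: ceq_sym; apply: ceq_trans; first exact: lin_single1.
  rewrite /op_vg decT // => y /=. by rewrite !addr0 mulr1.
rewrite decT; last by rewrite Hex.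
rewrite sbase_smove.
apply: ceq_trans; first exact: scalec_flat.
apply: ceq_sym; apply: ceq_trans; first exact: lin_flat.
apply: ceq_flat_in => f Hf. apply: ceq_trans; first exact: ceq_scalec (ceq_sym (IH _)).
rewrite /op_vg decT; last by split; [apply: valid_extend|rewrite ssrc_extend].
rewrite smove_extend => y.
rewrite coef_scalec lin_single !coef_scalec /= pcoc_cats1 cc_cocycle. ring.
Qed.

Lemma expand_op_s_path e k x : spath x <> [::] ->
  ceq (lin (expand k) (op_s e x)) (lin (op_s e) (expand k x)).
Proof.
elim: k x => [|k IH] x Hne.
  by apply: ceq_trans; [exact: lin_expand0|exact: ceq_sym (lin_single1 _ _)].
case: x Hne => [[|f a] w h n] // _.
rewrite {1}op_s_cons. case: (decP (valid (State (f :: a) w h n))) => Hv; last first.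
  rewrite expand_invalid //. apply: ceq_sym; apply: ceq_trans; first exact: lin_single1.
  by rewrite /op_s decF.
case: (decP (f = e)) => Hfe; last first.
  rewrite lin_nil lin_kill // => p /expand_shape [_ _ [b Hb] Hvz _].
  by rewrite /op_s decT ?Hb /= ?decF //; apply: Hvz.
subst f.
apply: ceq_trans; first exact: lin_single1.
rewrite [expand k.+1 (State a _ _ _)]/= [expand k.+1 (State (e :: a) _ _ _)]/=.
have Hex : expandable (State a w h (Z.sub n 1)) <-> expandable (State (e :: a) w h n).
  by rewrite /expandable /sbase /=; split; case=> H1 H2; split => //; case: Hv.
case: (decP (expandable (State (e :: a) w h n))) => Hx; last first.
  rewrite decF; last by rewrite Hex.
  apply: ceq_sym; apply: ceq_trans; first exact: lin_single1.
  by rewrite /op_s decT //= decT.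
rewrite decT; last by rewrite Hex.
apply: ceq_sym; apply: ceq_trans; first exact: lin_flat.
apply: ceq_flat_in => f Hf. apply: ceq_scalec.
apply: ceq_trans; first exact: ceq_sym (IH _ _).
rewrite /op_s decT; last exact: valid_extend.
by rewrite /= decT //; apply: lin_single1.
Qed.

(* On a vertex state e^* first needs one expansion step: its ghost edge is
   matched by the unique term of the expansion beginning with e. *)
Lemma expand_op_s_vertex e k x : spath x = [::] ->
  ceq (lin (expand k) (op_s e x)) (lin (op_s e) (expand k.+1 x)).
Proof.
case: x => a w h n /= Ha; subst a; rewrite op_s_nil.
have Hbase : sbase (State [::] w h n) = actv (ginv h) w by [].
case: (decP (regular w)) => Hr; last first.
  rewrite decF; last by case.
  rewrite decF; last by case=> _; rewrite Hbase regular_actE.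
  apply: ceq_sym; apply: ceq_trans; first exact: lin_single1.
  by rewrite op_s_nil decF //; case.
rewrite (@decT (expandable _)); last by split => //; rewrite Hbase; apply: regular_act.
apply: ceq_sym; apply: ceq_trans; first exact: lin_flat.
apply: ceq_trans.
  apply: ceq_flat_in => f Hf; apply: ceq_scalec; apply: ceq_sym; apply: expand_op_s_path.
  by rewrite /extend /=.
pose f0 := acte (ginv h) e.
apply: ceq_trans.
  apply: (@ceq_flat_in _ _ _ _ _ (fun f => if dec (f = f0) then
     scalec (cc h f) (expand k (State [::] (rg (acte h f)) (phi h f) (Z.sub n 1))) else [::])) => f Hf.
  rewrite /extend /= op_s_cons decT; last exact: (valid_extend (x := State [::] w h n)).
  case: (decP (acte h f = e)) => H1; case: (decP (f = f0)) => H2.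
  - by apply: ceq_scalec; apply: lin_single1.
  - by exfalso; apply: H2; rewrite /f0 -H1 acteK.
  - by exfalso; apply: H1; rewrite H2 /f0 acteKV.
  - by [].
case: (decP (sg e = w)) => Hs.
  rewrite decT //. apply: ceq_trans; first apply: (@flat_single _ _ _ _ (fun f => f = f0) _ f0).
  - exact: fib_nodup.
  - by apply: fib_in; rewrite ?Hbase ?regular_actE // /f0 act_s Hs.
  - by [].
  by rewrite /f0 acteKV => y; rewrite lin_single.
rewrite decF; last by case.
apply: flat_nil => f Hf. rewrite decF // => E; apply: Hs.
by rewrite -(acteKV h e) -/f0 -E act_s (fib_sg Hf) Hbase actvKV.
Qed.

Lemma op_e_out e x p : List.In p (op_e e x) -> spath p.2 = e :: spath x.
Proof. by rewrite /op_e; case: decP => // _ [<-|]. Qed.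
Lemma op_s_out e x p : List.In p (op_s e x) -> spath p.2 = behead (spath x).
Proof.
rewrite /op_s; case: decP => // _; case: (spath x) => [|f a].
  by case: decP => // _ [<-|].
by case: decP => // _ [<-|].
Qed.
Lemma op_vg_out v g x p : List.In p (op_vg v g x) -> size (spath p.2) = size (spath x).
Proof. by rewrite /op_vg; case: decP => // _ [<-|] //=; rewrite size_pact. Qed.

Lemma lin_expand_to A D k : (forall p, List.In p A -> (D - size (spath p.2))%N = k) ->
  lin (expand_to D) A = lin (expand k) A.
Proof.
elim: A => //= [[r x] A IH] H. rewrite !lin_cons IH; last by move=> p Hp; apply: H; right.
by rewrite /expand_to (H (r, x)) //; left.
Qed.

Lemma expandc_op_e e D F : ceq (expandc D.+1 (lin (op_e e) F)) (lin (op_e e) (expandc D F)).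
Proof.
rewrite /expandc. apply: ceq_trans; first exact: lin_lin.
apply: ceq_trans; last exact: ceq_sym (lin_lin _ _ _).
apply: lin_ext => x. rewrite (@lin_expand_to _ _ (D - size (spath x))%N); first exact: expand_op_e.
by move=> p /op_e_out -> /=; lia.
Qed.
Lemma expandc_op_vg v g D F : ceq (expandc D (lin (op_vg v g) F)) (lin (op_vg v g) (expandc D F)).
Proof.
rewrite /expandc. apply: ceq_trans; first exact: lin_lin.
apply: ceq_trans; last exact: ceq_sym (lin_lin _ _ _).
apply: lin_ext => x. rewrite (@lin_expand_to _ _ (D - size (spath x))%N); first exact: expand_op_vg.
by move=> p /op_vg_out ->.
Qed.
Lemma expandc_op_s e D F : ceq (expandc D (lin (op_s e) F)) (lin (op_s e) (expandc D.+1 F)).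
Proof.
rewrite /expandc. apply: ceq_trans; first exact: lin_lin.
apply: ceq_trans; last exact: ceq_sym (lin_lin _ _ _).
apply: lin_ext => x. case Hs: (spath x) => [|f a].
  rewrite (@lin_expand_to _ _ D); last by move=> p /op_s_out ->; rewrite Hs /= subn0.
  rewrite /expand_to Hs subn0. exact: expand_op_s_vertex.
rewrite (@lin_expand_to _ _ (D - size a)%N); last by move=> p /op_s_out ->; rewrite Hs.
rewrite /expand_to Hs /= subSS. apply: expand_op_s_path. by rewrite Hs.
Qed.

Definition respects_ckeq (A : state -> comb) :=
  forall F H, ckeq F H -> ckeq (lin A F) (lin A H).

Lemma op_e_ckeq e : respects_ckeq (op_e e).
Proof.
move=> F H [D E]; exists D.+1.
apply: ceq_trans; first exact: expandc_op_e.
apply: ceq_trans; last exact: ceq_sym (expandc_op_e _ _ _). exact: ceq_lin.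
Qed.
Lemma op_vg_ckeq v g : respects_ckeq (op_vg v g).
Proof.
move=> F H [D E]; exists D.
apply: ceq_trans; first exact: expandc_op_vg.
apply: ceq_trans; last exact: ceq_sym (expandc_op_vg _ _ _ _). exact: ceq_lin.
Qed.
Lemma op_s_ckeq e : respects_ckeq (op_s e).
Proof.
move=> F H [D E]; exists D.
apply: ceq_trans; first exact: expandc_op_s.
apply: ceq_trans; last exact: ceq_sym (expandc_op_s _ _ _). apply: ceq_lin.
exact: (expandc_ceq_up (leqnSn D) E).
Qed.

Fixpoint rep (a : LGX) : state -> comb :=
  match a with
  | fvar (LGe e) => op_e e
  | fvar (LGs e) => op_s e
  | fvar (LGvg v g) => op_vg v g
  | fzero => fun _ => [::]
  | fadd a b => fun x => rep a x ++ rep b x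
  | fscale r a => fun x => scalec r (rep a x)
  | fmul a b => fun x => lin (rep a) (rep b x)
  end.

Lemma rep_ckeq a : respects_ckeq (rep a).
Proof.
elim: a => [[e|e|v g]||a IHa b IHb|r a IH|a IHa b IHb] /=.
- exact: op_e_ckeq.
- exact: op_s_ckeq.
- exact: op_vg_ckeq.
- by move=> F H _; rewrite !lin0; apply: ckeq_refl.
- move=> F H E. apply: (ckeq_ceq (lin_add _ _ _) (lin_add _ _ _)). apply: ckeq_cat; auto.
- move=> F H E. apply: (ckeq_ceq (lin_scalel _ _ _) (lin_scalel _ _ _)). apply: ckeq_scalec; auto.
- move=> F H E. apply: (ckeq_ceq (ceq_sym (lin_lin _ _ _)) (ceq_sym (lin_lin _ _ _))). auto.
Qed.

Lemma op_s_ssrc e y : ssrc y <> sg e -> op_s e y = [::].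
Proof.
rewrite /op_s /ssrc; case: decP => // Hv; case: (spath y) => [|f a] /= H.
  by rewrite decF // => -[H1 _]; apply: H.
by rewrite decF // => E; subst.
Qed.
Lemma op_s_out_valid e x p : List.In p (op_s e x) -> valid p.2 /\ ssrc p.2 = rg e.
Proof.
rewrite /op_s; case: decP => // Hv; case Hs: (spath x) => [|f a].
  by case: decP => // _ [<-|].
case: decP => // E [<-|] //=; subst f. rewrite /valid Hs in Hv. by case: Hv.
Qed.

Definition rep_eq (a b : LGX) := forall x, ckeq (rep a x) (rep b x).

Lemma rep_LGr_e e : rep_eq (xe e) (fmul (fmul (xv (sg e)) (xe e)) (xv (rg e))).
Proof.
move=> x; apply: ceq_ckeq; rewrite /xe /xv /= op_vg1.
case: decP => H; last by rewrite lin_nil /op_e decF.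
apply: ceq_sym; apply: ceq_trans; first exact: lin_single1.
rewrite /op_e decT; last by case: H.
apply: ceq_trans; first exact: lin_single1.
by rewrite op_vg1 decT //; case: H => Hv Hr.
Qed.

Lemma rep_LGr_s e : rep_eq (xs e) (fmul (fmul (xv (rg e)) (xs e)) (xv (sg e))).
Proof.
move=> x; apply: ceq_ckeq; rewrite /xs /xv /= op_vg1.
case: decP => H.
  apply: ceq_sym; apply: ceq_trans; first exact: lin_single1.
  apply: lin_id_on => p /op_s_out_valid [H1 H2]. by rewrite op_vg1 decT.
rewrite lin_nil. case: (decP (valid x)) => Hv; last by rewrite /op_s decF.
by rewrite op_s_ssrc // => E; apply: H.
Qed.

Lemma rep_LGr_ee e : rep_eq (fmul (xs e) (xe e)) (xv (rg e)).
Proof.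
move=> x; apply: ceq_ckeq; rewrite /xs /xe /xv /= op_vg1 /op_e.
case: decP => H; last by rewrite lin_nil.
apply: ceq_trans; first exact: lin_single1.
rewrite op_s_cons decT; last by case: H => Hv Hr; split.
by rewrite decT // Z.add_simpl_r state_eta.
Qed.

Lemma rep_LGr_ef e f : e <> f -> rep_eq (fmul (xs e) (xe f)) fzero.
Proof.
move=> Hef x; apply: ceq_ckeq; rewrite /xs /xe /= /op_e.
case: decP => H; last by rewrite lin_nil.
apply: ceq_trans; first exact: lin_single1.
rewrite op_s_cons. case: decP => // _. by rewrite decF // => E; apply: Hef.
Qed.

Lemma rep_LGr_vgwh v g w h : v = actv g w ->
  rep_eq (fmul (xvg v g) (xvg w h)) (xvg v (gmul g h)).
Proof.
move=> Hv x; apply: ceq_ckeq; rewrite /xvg /=.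
rewrite {2}/op_vg. case: decP => H; last first.
  rewrite lin_nil /op_vg decF //. case=> H1 H2; apply: H; split => //.
  apply: (actv_inj (g:=g)). by rewrite -Hv H2 actvM.
case: H => H1 H2.
apply: ceq_trans; first exact: lin_single.
rewrite /op_vg decT; last by split; [apply: valid_smove|rewrite ssrc_smove -H2].
rewrite decT; last by split => //; rewrite actvM -H2.
move=> y /=. rewrite !addr0 /smove /= -pactM -actvM gmulA -pphiM pcocM.
by case: decP => _; ring.
Qed.

Lemma rep_LGr_vgwh0 v g w h : v <> actv g w -> rep_eq (fmul (xvg v g) (xvg w h)) fzero.
Proof.
move=> Hv x; apply: ceq_ckeq; rewrite /xvg /=.
rewrite {2}/op_vg. case: decP => H; last by rewrite lin_nil.
case: H => H1 H2.
apply: ceq_trans; first exact: lin_single.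
rewrite /op_vg decF // => -[_ H3]. apply: Hv. by rewrite H3 ssrc_smove -H2.
Qed.

Lemma rep_LGr_vge v g e : v = actv g (sg e) ->
  rep_eq (fmul (xvg v g) (xe e))
         (fscale (cc g e) (fmul (xe (acte g e)) (xvg (rg (acte g e)) (phi g e)))).
Proof.
move=> Hv x; apply: ceq_ckeq; rewrite /xvg /xe /=.
rewrite {1}/op_e. case: decP => H; last first.
  rewrite lin_nil {1}/op_vg decF ?lin_nil //.
  case=> H1 H2; apply: H; split => //. apply: (actv_inj (g:=g)).
  by rewrite -act_r H2 /ssrc phi_vert.
case: H => H1 H2.
apply: ceq_trans; first exact: lin_single1.
rewrite /op_vg decT; last by split; [split|rewrite /ssrc /= Hv].
rewrite decT; last by split => //; rewrite act_r H2 phi_vert.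
move=> y. rewrite coef_scalec lin_single coef_scalec /op_e decT; last first.
  split; first exact: is_path_pact.
  by rewrite /ssrc /= path_src_pact act_r H2 phi_vert.
by rewrite /smove /= !addr0 phi_vert; case: decP => _; ring.
Qed.

Lemma rep_LGr_vge0 v g e : v <> actv g (sg e) -> rep_eq (fmul (xvg v g) (xe e)) fzero.
Proof.
move=> Hv x; apply: ceq_ckeq; rewrite /xvg /xe /=.
rewrite {1}/op_e. case: decP => H; last by rewrite lin_nil.
apply: ceq_trans; first exact: lin_single1.
by rewrite /op_vg decF // => -[_ E]; apply: Hv.
Qed.

Lemma op_s_op_vg_vertex e g w h n : let f := acte (ginv g) e in
  ceq (lin (op_s e) (op_vg (sg e) g (State [::] w h n)))
      (scalec (cc g f) (lin (op_vg (rg e) (phi g f)) (op_s f (State [::] w h n)))).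
Proof.
move=> f; have Hgf : acte g f = e by rewrite /f acteKV.
rewrite op_s_nil {1}/op_vg /=.
have Hc : (sg e = actv g w /\ (sg e = actv g w /\ regular (actv g w))) <-> (sg f = w /\ regular w).
  rewrite /f act_s regular_actE; split.
    by case=> _ [-> Hr]; rewrite actvK.
  by case=> <- Hr; rewrite actvKV.
case: (decP (sg f = w /\ regular w)) => H; last first.
  rewrite lin_nil. case: decP => H1; last by rewrite lin_nil.
  apply: ceq_trans; first exact: lin_single1.
  rewrite /= op_s_nil decF //. case: H1 => _ H1 H2; apply: H; apply/Hc; split => //.
case: H => Hs Hr. rewrite decT; last by split => //; rewrite /ssrc /= -Hs /f act_s actvKV.
apply: ceq_trans; first exact: lin_single1.
rewrite /= op_s_nil decT; last by split; [rewrite -Hs /f act_s actvKV|apply: regular_act].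
move=> y. rewrite coef_scalec lin_single coef_scalec /op_vg decT; last first.
  by split => //; rewrite /ssrc /= phi_vert -act_r Hgf.
have E1 : acte (ginv (gmul g h)) e = acte (ginv h) f by rewrite ginvM acteM.
have E2 : acte h (acte (ginv h) f) = f by rewrite acteKV.
rewrite /smove E1 phi_cocycle cc_cocycle E2 /= phi_vert -act_r Hgf !addr0.
by case: decP => _; ring.
Qed.

Lemma op_s_op_vg_path e g f1 a w h n : valid (State (f1 :: a) w h n) ->
  let f := acte (ginv g) e in
  ceq (lin (op_s e) (op_vg (sg e) g (State (f1 :: a) w h n)))
      (scalec (cc g f) (lin (op_vg (rg e) (phi g f)) (op_s f (State (f1 :: a) w h n)))).
Proof.
move=> Hx f; have Hgf : acte g f = e by rewrite /f acteKV.
rewrite op_s_cons decT // {1}/op_vg.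
case: (decP (f1 = f)) => H; last first.
  rewrite lin_nil. case: decP => H1; last by rewrite lin_nil.
  apply: ceq_trans; first exact: lin_single.
  rewrite /= op_s_cons decT; last by apply: (valid_smove g (x := State (f1 :: a) w h n)); case: H1.
  rewrite decF; last by move=> E; apply: H; rewrite /f -E acteK.
  by move=> y; rewrite !coef_scalec /= !mulr0.
subst f1. rewrite decT; last by split => //; rewrite /ssrc /= -Hgf act_s.
apply: ceq_trans; first exact: lin_single.
rewrite /= op_s_cons decT; last by apply: (valid_smove g (x := State (f :: a) w h n)).
rewrite decT //.
move=> y. rewrite !coef_scalec lin_single1 /op_vg decT; last first.
  case: Hx => Hx1 Hx2. split => //. by rewrite /ssrc /= -Hx1 phi_vert -act_r Hgf.
by rewrite /smove /= !addr0 phi_vert; case: decP => _; ring.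
Qed.

Lemma rep_LGr_svg e v g : v = sg e ->
  rep_eq (fmul (xs e) (xvg v g))
     (fscale (cc g (acte (ginv g) e))
        (fmul (xvg (rg e) (phi g (acte (ginv g) e))) (xs (acte (ginv g) e)))).
Proof.
move=> -> x; apply: ceq_ckeq; rewrite /xvg /xs /=.
case: (decP (valid x)) => Hx; last first.
  by rewrite /op_vg decF ?lin_nil /op_s ?decF ?lin_nil // => -[].
case: x Hx => [[|f1 a] w h n] Hx.
- exact: op_s_op_vg_vertex.
- exact: op_s_op_vg_path.
Qed.

Lemma rep_LGr_svg0 e v g : v <> sg e -> rep_eq (fmul (xs e) (xvg v g)) fzero.
Proof.
move=> Hv x; apply: ceq_ckeq; rewrite /xvg /xs /=.
rewrite {1}/op_vg. case: decP => H; last by rewrite lin_nil.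
apply: ceq_trans; first exact: lin_single.
rewrite op_s_ssrc; first by move=> y; rewrite coef_scalec /= mulr0.
case: H => _ H. by rewrite ssrc_smove -H.
Qed.

Lemma rep_fsum (ls : seq Ed) (F : Ed -> LGX) x :
  rep (fsum ls F) x = flatten (map (fun e => rep (F e) x) ls).
Proof. by elim: ls => //= e ls ->. Qed.

(* (CK2) at a vertex state is the only relation that needs an expansion step. *)
Lemma CK2_vertex v ls h n : enumerates_fiber v ls ->
  ckeq [:: (1, State [::] v h n)]
       (flatten (map (fun e => lin (op_e e) (op_s e (State [::] v h n))) ls)).
Proof.
move=> Hls; have [Hne [Hnd Hin]] := Hls.
have Hreg : regular v by exists ls.
pose c := fun e => cc h (acte (ginv h) e).
pose B := fun e => [:: ((1 : l), State [:: e] (rg e) (phi h (acte (ginv h) e)) n)].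
have R : ceq (flatten (map (fun e => lin (op_e e) (op_s e (State [::] v h n))) ls))
             (flatten (map (fun e => scalec (c e) (B e)) ls)).
  apply: ceq_flat_in => e He. rewrite op_s_nil decT; last by split => //; apply/Hin.
  apply: ceq_trans; first exact: lin_single.
  by rewrite /op_e decT //= Z.sub_add.
apply: ckeq_trans; last exact: ceq_ckeq (ceq_sym R).
exists 1%N.
apply: ceq_trans; first exact: lin_single1.
rewrite /expand_to /= decT; last by split => //; rewrite /sbase /=; apply: regular_act.
apply: ceq_trans.
  apply: (@ceq_flat _ _ _ _ _ (fun f => scalec (c (acte h f)) (B (acte h f)))) => f.
  by rewrite /c /B acteK /extend /=.
rewrite (_ : map _ _ = map (fun e => scalec (c e) (B e)) (map (acte h) (fib (actv (ginv h) v))));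
  last by rewrite -map_comp.
apply: ceq_trans.
  apply: (@perm_flat _ _ _ _ ls). apply: NoDup_Permutation => //.
    apply: NoDup_map_inj; [exact: acte_inj|exact: fib_nodup].
  move=> e; rewrite Hin; split.
    case/List.in_map_iff => f [<- Hf]. by rewrite act_s (fib_sg Hf) /sbase /= actvKV.
  move=> He. apply/List.in_map_iff. exists (acte (ginv h) e); split; first exact: acteKV.
  apply: fib_in; first by rewrite /sbase /=; apply: regular_act.
  by rewrite act_s He.
apply: ceq_sym. rewrite /expandc (@lin_expand_to _ _ 0%N); first exact: lin_expand0.
move=> p; clear R Hls Hne Hnd Hin; elim: ls => //= e L IH Hp.
case: Hp => [<-|H] //. by apply: IH.
Qed.

Lemma CK2_path v ls f a w h n : enumerates_fiber v ls -> valid (State (f :: a) w h n) ->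
  ceq (if dec (v = sg f) then [:: (1, State (f :: a) w h n)] else [::])
      (flatten (map (fun e => lin (op_e e) (op_s e (State (f :: a) w h n))) ls)).
Proof.
move=> [Hne [Hnd Hin]] Hx.
case: (decP (v = sg f)) => Hf; last first.
  apply: ceq_sym; apply: flat_nil => e /Hin He.
  rewrite op_s_cons decT // decF ?lin_nil // => E; apply: Hf; by rewrite E He.
apply: ceq_sym. apply: ceq_trans.
  apply: (@ceq_flat_in _ _ _ _ _ (fun e => if dec (e = f) then [:: (1, State (f :: a) w h n)] else [::])) => e He.
  rewrite op_s_cons decT //. case: (decP (f = e)) => E1.
    subst e. rewrite decT //. apply: ceq_trans; first exact: lin_single1.
    rewrite /op_e decT /=; last by case: Hx.
    by rewrite Z.sub_add.
  by rewrite decF // => E; apply: E1.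
by apply: (@flat_single _ _ _ _ (fun e => e = f) _ f) => //; apply/Hin.
Qed.

Lemma rep_LGr_CK2 v ls : enumerates_fiber v ls ->
  rep_eq (xv v) (fsum ls (fun e => fmul (xe e) (xs e))).
Proof.
move=> Hls x. have [_ [_ Hin]] := Hls.
rewrite rep_fsum /xv /xe /xs /= op_vg1.
case: (decP (valid x)) => Hx; last first.
  rewrite decF; last by case.
  apply: ceq_ckeq; apply: ceq_sym; apply: flat_nil => e _.
  by rewrite /op_s decF.
case: x Hx => [[|f a] w h n] Hx; last first.
  apply: ceq_ckeq; have := CK2_path Hls Hx; case: (decP (v = sg f)) => Hf.
    by rewrite decT.
  by rewrite decF // => -[].
case: (decP (v = w)) => Hvw; last first.
  rewrite decF; last by case.
  apply: ceq_ckeq; apply: ceq_sym; apply: flat_nil => e /Hin He.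
  by rewrite op_s_nil decF // => -[H _]; apply: Hvw; rewrite -He H.
subst w. rewrite decT //. exact: CK2_vertex.
Qed.

Lemma rep_sound_rel (a b : LGX) : LG_rel a b -> rep_eq a b.
Proof.
case.
- exact: rep_LGr_e.
- exact: rep_LGr_s.
- exact: rep_LGr_ee.
- exact: rep_LGr_ef.
- exact: rep_LGr_vgwh.
- exact: rep_LGr_vgwh0.
- exact: rep_LGr_vge.
- exact: rep_LGr_vge0.
- exact: rep_LGr_svg.
- exact: rep_LGr_svg0.
- exact: rep_LGr_CK2.
Qed.

Lemma rep_sound (a b : LGX) : fcong (@LG_rel l T) a b -> rep_eq a b.
Proof.
elim=> {a b}.
- exact: rep_sound_rel.
- by move=> a x; apply: ckeq_refl.
- by move=> a b _ H x; apply: ckeq_sym.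
- by move=> a b c _ H1 _ H2 x; apply: ckeq_trans (H1 x) (H2 x).
- by move=> a a' b b' _ H1 _ H2 x /=; apply: ckeq_cat.
- by move=> r a a' _ H x /=; apply: ckeq_scalec.
- move=> a a' b b' _ H1 _ H2 x /=. apply: ckeq_trans; first exact: rep_ckeq (H2 x).
  exact: lin_ckeq.
all: move=> *; move=> x; apply: ceq_ckeq => y /=.
- by rewrite catA.
- by rewrite !coef_cat addrC.
- by [].
- by rewrite coef_cat coef_scalec mulN1r addNr.
- by rewrite coef_scalec mul1r.
- by rewrite !coef_scalec mulrA.
- by rewrite !coef_scalec !coef_cat !coef_scalec mulrDr.
- by rewrite !coef_cat !coef_scalec mulrDl.
- exact: lin_lin.
- exact: lin_add.
- by rewrite lin_cat.
- exact: lin_scalel.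
- exact: lin_scalec.
Qed.

End Representation.

(** * Normal forms in L(E) *)

Section FormalSums.
Variables (R : comPzRingType) (X : Type) (rels : fexpr R X -> fexpr R X -> Prop).
Variables (M : Type) (ev : M -> fexpr R X).
Local Notation "a =f= b" := (fcong rels a b) (at level 70).
Implicit Types L : comb R M.

Definition fcomb L : fexpr R X := foldr (fun p acc => fadd (fscale p.1 (ev p.2)) acc) fzero L.

Lemma fcomb_cat L1 L2 : fcomb (L1 ++ L2) =f= fadd (fcomb L1) (fcomb L2).
Proof. elim: L1 => /= [|p L IH]; first by rewrite fc_add0. by rewrite IH fc_addA. Qed.
Lemma fcombZ r L : fscale r (fcomb L) =f= fcomb (scalec r L).
Proof.
elim: L => /= [|p L IH]; first exact: fscale_zero.
by rewrite fc_scaleDr IH fc_scaleA.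
Qed.
Lemma fmul_fcomb a (F : R * M -> R * M) L :
  (forall p, fmul a (fscale p.1 (ev p.2)) =f= fscale (F p).1 (ev (F p).2)) ->
  fmul a (fcomb L) =f= fcomb (map F L).
Proof.
move=> H; elim: L => /= [|p L IH]; first exact: fmul0r.
by rewrite fc_mulDr IH H.
Qed.
Lemma fcomb_filter (P : pred (R * M)) L :
  fcomb L =f= fadd (fcomb (filter P L)) (fcomb (filter (predC P) L)).
Proof.
elim: L => /= [|p L IH]; first by rewrite fc_add0.
rewrite IH. case: (P p) => /=; first by rewrite fc_addA.
rewrite !fc_addA. apply: fc_add => //. exact: fc_addC.
Qed.
Lemma fcomb_coef0 L : (forall p, List.In p L -> p.1 = 0) -> fcomb L =f= fzero.
Proof.
elim: L => //= p L IH H. rewrite IH; last by move=> q Hq; apply: H; right.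
by rewrite (H p) ?fscale0 ?fadd0 //; left.
Qed.

Lemma coef_filter_neq L m m' : m' <> m ->
  coef (filter (fun p => ~~ dec (p.2 = m)) L) m' = coef L m'.
Proof.
move=> H. elim: L => //= p L IH. case: (decP (p.2 = m)) => H1 /=.
  by rewrite decF ?add0r // => E; apply: H; rewrite -E.
by rewrite IH.
Qed.
Lemma fcomb_collect L m :
  fcomb L =f= fadd (fscale (coef L m) (ev m)) (fcomb (filter (fun p => ~~ dec (p.2 = m)) L)).
Proof.
elim: L => /= [|[r m'] L IH]; first by rewrite fscale0 fc_add0.
rewrite IH. case: (decP (m' = m)) => H /=.
  by subst m'; rewrite fc_addA -fc_scaleDl.
rewrite add0r !fc_addA. apply: fc_add => //. exact: fc_addC.
Qed.

Lemma fcomb_eq0 L : (forall p, List.In p L -> coef L p.2 = 0 \/ ev p.2 =f= fzero) ->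
  fcomb L =f= fzero.
Proof.
move: {2}(size L) (leqnn (size L)) => n; elim: n L => [|n IH] L Hs H; first by case: L Hs H.
case: L Hs H => [|[r m] L'] Hs H; first by [].
rewrite (fcomb_collect _ m) (IH (filter (fun p => ~~ dec (p.2 = m)) ((r, m) :: L'))).
- rewrite fadd0. case: (H (r, m)) => /= [|->|->]; first by left.
  + by rewrite fscale0.
  + by rewrite fscale_zero.
- rewrite /= decT //= size_filter. have := count_size (fun p => ~~ dec (p.2 = m)) L'. move: Hs => /=. lia.
- move=> p /In_filter [Hp /negP Hd]. rewrite coef_filter_neq; last by move=> E; apply: Hd; rewrite E decT.
  exact: H.
Qed.

End FormalSums.

Section LeavittNormalForm.
Variables (l : comPzRingType) (E : graph).
Local Notation V := (vert E).
Local Notation Ed := (edge E).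
Local Notation LEX := (fexpr l (LE_gen E)).
Local Notation "a ~E b" := (fcong (@LE_rel l E) a b) (at level 70).
Local Notation vv v := (fvar (LEv v) : LEX).
Local Notation ve e := (fvar (LEe e) : LEX).
Local Notation vs e := (fvar (LEs e) : LEX).

Lemma LE_vv v : fmul (vv v) (vv v) ~E vv v. Proof. by apply: fc_rel; constructor. Qed.
Lemma LE_vw v w : v <> w -> fmul (vv v) (vv w) ~E fzero. Proof. by move=> H; apply: fc_rel; constructor. Qed.
Lemma LE_se e : fmul (vv (sg e)) (ve e) ~E ve e. Proof. by apply: fc_rel; constructor. Qed.
Lemma LE_er e : fmul (ve e) (vv (rg e)) ~E ve e. Proof. by apply: fc_rel; constructor. Qed.
Lemma LE_rs e : fmul (vv (rg e)) (vs e) ~E vs e. Proof. by apply: fc_rel; constructor. Qed.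
Lemma LE_ss e : fmul (vs e) (vv (sg e)) ~E vs e. Proof. by apply: fc_rel; constructor. Qed.
Lemma LE_ee e : fmul (vs e) (ve e) ~E vv (rg e). Proof. by apply: fc_rel; constructor. Qed.
Lemma LE_ef e f : e <> f -> fmul (vs e) (ve f) ~E fzero. Proof. by move=> H; apply: fc_rel; constructor. Qed.

Lemma LE_ve0 v e : v <> sg e -> fmul (vv v) (ve e) ~E fzero.
Proof. move=> H. by rewrite -LE_se fc_mulA LE_vw // fmul0l. Qed.
Lemma LE_sv0 e w : sg e <> w -> fmul (vs e) (vv w) ~E fzero.
Proof. move=> H. by rewrite -LE_ss -fc_mulA LE_vw // fmul0r. Qed.
Lemma LE_vs0 v e : v <> rg e -> fmul (vv v) (vs e) ~E fzero.
Proof. move=> H. by rewrite -LE_rs fc_mulA LE_vw // fmul0l. Qed.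

(* gexp x [:: g_1; ...; g_n] is the word x g_1^* ... g_n^*; a monomial
   Mo a w gs stands for a w gs^*. *)
Fixpoint gexp (x : LE_gen E) (gs : seq Ed) : LEX :=
  if gs is g :: gs' then fmul (fvar x) (gexp (LEs g) gs') else fvar x.
Record mono := Mo { mpath : seq Ed; mvert : V; mghost : seq Ed }.
Fixpoint mexp0 (a : seq Ed) (w : V) (gs : seq Ed) : LEX :=
  if a is e :: a' then fmul (ve e) (mexp0 a' w gs) else gexp (LEv w) gs.
Definition mexp (m : mono) : LEX := mexp0 (mpath m) (mvert m) (mghost m).
Definition msrc (m : mono) : V := path_src (mpath m) (mvert m).

Local Notation lcomb := (comb l mono).
Local Notation lcsum := (fcomb mexp).

Lemma gexp_s g gs : gexp (LEs g) gs ~E fmul (vs g) (gexp (LEv (sg g)) gs).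
Proof.
case: gs => [|g' gs] /=; first by rewrite LE_ss.
by rewrite fc_mulA LE_ss.
Qed.
Lemma gexp_eq0 w gs : ~ ghost_path w gs -> gexp (LEv w) gs ~E fzero.
Proof.
elim: gs w => [|g gs IH] w /= H; first by exfalso; apply: H.
rewrite gexp_s. case: (decP (rg g = w)) => Hg.
  rewrite IH ?fmul0r //. by move=> H'; apply: H.
by rewrite fc_mulA LE_vs0 ?fmul0l // => E'; apply: Hg.
Qed.

Lemma scale_if (c : bool) r (m a : LEX) :
  a ~E (if c then m else fzero) -> fscale r a ~E fscale (if c then r else 0) m.
Proof. case: c => H; rewrite H //. by rewrite fscale_zero fscale0. Qed.

Lemma mul_v_mono v m : fmul (vv v) (mexp m) ~E (if dec (v = msrc m) then mexp m else fzero).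
Proof.
case: m => [[|e a] w gs]; rewrite /mexp /msrc /=.
  case: gs => [|g gs] /=.
    by case: decP => H; [rewrite H LE_vv|exact: LE_vw].
  case: decP => H; first by rewrite fc_mulA H LE_vv.
  by rewrite fc_mulA LE_vw // fmul0l.
case: decP => H; first by rewrite fc_mulA H LE_se.
by rewrite fc_mulA LE_ve0 // fmul0l.
Qed.
Lemma mul_e_mono e m : fmul (ve e) (mexp m) ~E
  (if dec (rg e = msrc m) then mexp (Mo (e :: mpath m) (mvert m) (mghost m)) else fzero).
Proof. rewrite -LE_er -fc_mulA mul_v_mono. case: decP => H //. by rewrite fmul0r. Qed.
Lemma mul_s_mono e m : fmul (vs e) (mexp m) ~E
  match mpath m with
  | f :: a => if dec (f = e /\ rg e = path_src a (mvert m)) then mexp (Mo a (mvert m) (mghost m)) else fzero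
  | [::] => if dec (sg e = mvert m) then mexp (Mo [::] (rg e) (e :: mghost m)) else fzero
  end.
Proof.
case: m => [[|f a] w gs]; rewrite /mexp /=.
  case: decP => H.
    subst w. rewrite -gexp_s /=. case: gs => [|g gs] /=; first by rewrite LE_rs.
    by rewrite fc_mulA LE_rs.
  case: gs => [|g gs] /=; first exact: LE_sv0.
  by rewrite fc_mulA LE_sv0 // fmul0l.
rewrite fc_mulA. case: (decP (f = e)) => Hf; last first.
  rewrite decF; last by case.
  rewrite LE_ef ?fmul0l //. by move=> E'; apply: Hf.
subst f. rewrite LE_ee.
have := mul_v_mono (rg e) (Mo a w gs). rewrite /mexp /msrc /= => ->.
case: decP => H1; case: decP => H2 //.
- by exfalso; apply: H2.
- by exfalso; apply: H1; case: H2.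
Qed.

Definition lcmul_v v (L : lcomb) : lcomb :=
  map (fun p => (if dec (v = msrc p.2) then p.1 else 0, p.2)) L.
Definition lcmul_e e (L : lcomb) : lcomb :=
  map (fun p => (if dec (rg e = msrc p.2) then p.1 else 0, Mo (e :: mpath p.2) (mvert p.2) (mghost p.2))) L.
Definition lcmul_s e (L : lcomb) : lcomb :=
  map (fun p => match mpath p.2 with
                | f :: a => (if dec (f = e /\ rg e = path_src a (mvert p.2)) then p.1 else 0,
                             Mo a (mvert p.2) (mghost p.2))
                | [::] => (if dec (sg e = mvert p.2) then p.1 else 0, Mo [::] (rg e) (e :: mghost p.2))
                end) L.

Lemma mul_v_lcsum v L : fmul (vv v) (lcsum L) ~E lcsum (lcmul_v v L).
Proof. apply: fmul_fcomb => p /=. rewrite fc_scaler. apply: scale_if. exact: mul_v_mono. Qed.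
Lemma mul_e_lcsum e L : fmul (ve e) (lcsum L) ~E lcsum (lcmul_e e L).
Proof. apply: fmul_fcomb => p /=. rewrite fc_scaler. apply: scale_if. exact: mul_e_mono. Qed.
Lemma mul_s_lcsum e L : fmul (vs e) (lcsum L) ~E lcsum (lcmul_s e L).
Proof.
apply: fmul_fcomb => p /=. rewrite fc_scaler.
have := mul_s_mono e p.2. case: (mpath p.2) => [|f a] H; apply: scale_if; exact: H.
Qed.

Lemma mul_gen_lcsum (x : LE_gen E) L : exists L', fmul (fvar x) (lcsum L) ~E lcsum L'.
Proof.
case: x => [v|e|e]; [exists (lcmul_v v L); exact: mul_v_lcsum
  |exists (lcmul_e e L); exact: mul_e_lcsum|exists (lcmul_s e L); exact: mul_s_lcsum].
Qed.
Lemma mul_mono_lcsum m L : exists L', fmul (mexp m) (lcsum L) ~E lcsum L'.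
Proof.
case: m => a w gs; rewrite /mexp /=. elim: a L => /= [|e a IH] L.
  elim: gs (LEv w) L => /= [|g gs IHg] x L; first exact: mul_gen_lcsum.
  have [L1 H1] := IHg (LEs g) L. have [L2 H2] := mul_gen_lcsum x L1.
  exists L2. by rewrite -fc_mulA H1 H2.
have [L1 H1] := IH L. exists (lcmul_e e L1). by rewrite -fc_mulA H1 mul_e_lcsum.
Qed.
Lemma mul_lcsum L1 L2 : exists L, fmul (lcsum L1) (lcsum L2) ~E lcsum L.
Proof.
elim: L1 => /= [|p L1 [L IH]]; first by exists [::]; exact: fmul0l.
have [L' H'] := mul_mono_lcsum p.2 L2.
exists (scalec p.1 L' ++ L). by rewrite fcomb_cat fc_mulDl IH fc_scalel H' fcombZ.
Qed.

Lemma normal_form (a : LEX) : exists L, a ~E lcsum L.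
Proof.
elim: a => [x||a [La Ha] b [Lb Hb]|r a [La Ha]|a [La Ha] b [Lb Hb]].
- case: x => [v|e|e].
  + exists [:: (1, Mo [::] v [::])]. by rewrite /= /mexp /= fc_scale1 fadd0.
  + exists [:: (1, Mo [:: e] (rg e) [::])]. by rewrite /= /mexp /= fc_scale1 fadd0 LE_er.
  + exists [:: (1, Mo [::] (rg e) [:: e])]. by rewrite /= /mexp /= fc_scale1 fadd0 LE_rs.
- by exists [::].
- exists (La ++ Lb). by rewrite fcomb_cat Ha Hb.
- exists (scalec r La). by rewrite Ha fcombZ.
- have [L HL] := mul_lcsum La Lb. exists L. by rewrite Ha Hb HL.
Qed.

Lemma lcmul_v_id v L : (forall p, List.In p L -> v = msrc p.2) -> lcsum (lcmul_v v L) ~E lcsum L.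
Proof.
elim: L => //= p L IH H. rewrite IH; last by move=> q Hq; apply: H; right.
by rewrite decT //; apply: H; left.
Qed.
Lemma lcmul_v_filter v L : lcsum (lcmul_v v L) ~E lcsum (filter (fun p => dec (v = msrc p.2)) L).
Proof.
elim: L => //= p L IH. rewrite IH. case: decP => H //=.
by rewrite fscale0 fc_add0.
Qed.
Lemma coef_lcmul_s_vertex e L gs : (forall p, List.In p L -> mpath p.2 = [::] /\ mvert p.2 = sg e) ->
  coef (lcmul_s e L) (Mo [::] (rg e) (e :: gs)) = coef L (Mo [::] (sg e) gs).
Proof.
elim: L => //= [[r [a w gs']]] L IH H /=.
have [Ha Hw] := H (r, Mo a w gs') (or_introl erefl). simpl in Ha, Hw. subst a w.
rewrite IH; last by move=> q Hq; apply: H; right.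
rewrite /= (@decT (sg e = sg e)) //. case: decP => H1; case: decP => H2 //.
- by exfalso; apply: H2; case: H1 => ->.
- by exfalso; apply: H1; case: H2 => ->.
Qed.

(* The induction measure: the total length of the real paths. *)
Definition weight (L : lcomb) : nat := sumn (map (fun p => size (mpath p.2)) L).
Definition ghost_only (p : l * mono) : bool := if mpath p.2 is [::] then true else false.

Lemma weight_filter (P : pred (l * mono)) L :
  weight L = (weight (filter P L) + weight (filter (predC P) L))%N.
Proof. rewrite /weight. elim: L => //= p L IH. case: (P p) => /=; lia. Qed.
Lemma weight_In p L : List.In p L -> (size (mpath p.2) <= weight L)%N.
Proof. rewrite /weight. elim: L => //= q L IH [<-|H]; first by lia. have := IH H. lia. Qed.
Lemma weight_lcmul_s e L : (weight (lcmul_s e L) + count (predC ghost_only) L)%N = weight L.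
Proof.
rewrite /weight /ghost_only. elim: L => //= [[r [a w gs]]] L IH /=.
case: a => [|f a] /=; lia.
Qed.
Lemma weight_lcmul_s_lt e L p : List.In p L -> mpath p.2 <> [::] -> (weight (lcmul_s e L) < weight L)%N.
Proof.
move=> Hp Hn. rewrite -(weight_lcmul_s e L). have : (0 < count (predC ghost_only) L)%N.
  apply: (count_In_gt0 Hp). rewrite /ghost_only /=. by case: (mpath p.2) Hn.
lia.
Qed.

Definition first_edges (L : lcomb) : seq Ed :=
  foldr (fun p acc => if mpath p.2 is f :: _ then f :: acc else acc) [::] L.
Lemma first_edges_In L p f a : List.In p L -> mpath p.2 = f :: a -> List.In f (first_edges L).
Proof.
elim: L => //= q L IH [<-|H] Hm; first by rewrite Hm; left.
case: (mpath q.2) => [|g b]; [exact: IH|right; exact: IH].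
Qed.
Lemma first_edgesP L f : List.In f (first_edges L) -> exists p a, List.In p L /\ mpath p.2 = f :: a.
Proof.
elim: L => //= q L IH. case Hq: (mpath q.2) => [|g b].
  by move/IH => [p [a [H1 H2]]]; exists p, a; split => //; right.
case=> [Eg|H]; first by subst g; exists q, b; split => //; left.
by case: (IH H) => p [a [H1 H2]]; exists p, a; split => //; right.
Qed.

Lemma lcmul_s_fresh_eq0 e (L : lcomb) : ~ List.In e (first_edges L) ->
  (forall p, List.In p L -> mpath p.2 <> [::]) -> lcsum (lcmul_s e L) ~E fzero.
Proof.
move=> Hnin Hne; apply: fcomb_coef0 => q /List.in_map_iff [p [<- Hp]].
case Hma: (mpath p.2) (Hne p Hp) => [//|f a] _. rewrite decF // => -[Ef _].
by apply: Hnin; rewrite -Ef; exact: first_edges_In Hp Hma.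
Qed.

Lemma fsum_ee_mono (Hd : seq Ed) m f0 a : List.NoDup Hd -> mpath m = f0 :: a -> List.In f0 Hd ->
  fsum Hd (fun f => fmul (ve f) (fmul (vs f) (mexp m))) ~E mexp m.
Proof.
move=> Hn Hm Hin. rewrite (@fsum_single _ _ _ _ _ _ f0) //.
  rewrite mul_s_mono Hm. case: decP => H.
    by rewrite /mexp Hm.
  rewrite fmul0r /mexp Hm /=. symmetry. have := mul_e_mono f0 (Mo a (mvert m) (mghost m)).
  rewrite /mexp /msrc /= => ->. rewrite decF //. by move=> Er; apply: H.
move=> f Hf Hne. rewrite mul_s_mono Hm decF ?fmul0r // => -[Ef _]. by apply: Hne.
Qed.
Lemma fsum_ee_lcsum (Hd : seq Ed) L : List.NoDup Hd ->
  (forall p, List.In p L -> exists f a, mpath p.2 = f :: a /\ List.In f Hd) ->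
  fsum Hd (fun f => fmul (ve f) (fmul (vs f) (lcsum L))) ~E lcsum L.
Proof.
move=> Hn. elim: L => /= [|p L IH] H.
  by apply: fsum0 => f _; rewrite !fmul0r.
have [f0 [a [Hm Hin]]] := H p (or_introl erefl).
rewrite (@fsum_ext _ _ _ _ _ _ (fun f => fadd (fscale p.1 (fmul (ve f) (fmul (vs f) (mexp p.2))))
                                   (fmul (ve f) (fmul (vs f) (lcsum L))))).
  rewrite fsumD fsumZ (fsum_ee_mono Hn Hm Hin) IH //.
  by move=> q Hq; apply: H; right.
move=> f _. by rewrite !fc_mulDr !fc_scaler.
Qed.

End LeavittNormalForm.
Arguments gexp {l E} x gs.
Arguments mexp {l E} m.
Arguments ghost_only {l E} p.

(** * Faithfulness on L(E) *)

Section Faithfulness.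
Variables (l : comPzRingType) (T : twisted_EP l).
Local Notation G := (epG T).
Local Notation E := (epE T).
Local Notation V := (vert E).
Local Notation Ed := (edge E).
Local Notation g1 := (gone G).
Local Notation LEX := (fexpr l (LE_gen E)).
Local Notation "a ~G b" := (fcong (@LG_rel l T) a b) (at level 70).
Local Notation "a ~E b" := (fcong (@LE_rel l E) a b) (at level 70).
Local Notation lcomb := (comb l (mono E)).
Local Notation comb := (comb l (state T)).
Local Notation lcsum := (fcomb (@mexp l E)).
Local Notation vs e := (fvar (LEs e) : LEX).
Local Notation ve e := (fvar (LEe e) : LEX).
Local Notation vv v := (fvar (LEv v) : LEX).

Lemma LG_vv v : fmul (xv v) (xv v) ~G xv v.
Proof.
apply: fc_trans; first by apply: fc_rel; apply: (@LGr_vgwh l T v g1 v g1); rewrite actv1.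
by rewrite g1mul.
Qed.
Lemma LG_er e : fmul (xe e) (xv (rg e)) ~G xe e.
Proof. have H := fc_rel (LGr_e (T := T) e). by rewrite {1}H -fc_mulA LG_vv -H. Qed.
Lemma LG_rs e : fmul (xv (rg e)) (xs e) ~G xs e.
Proof. have H := fc_rel (LGr_s (T := T) e). by rewrite {1}H !fc_mulA LG_vv -H. Qed.
Lemma LG_ss e : fmul (xs e) (xv (sg e)) ~G xs e.
Proof. have H := fc_rel (LGr_s (T := T) e). by rewrite {1}H -fc_mulA LG_vv -H. Qed.
Lemma LG_se e : fmul (xv (sg e)) (xe e) ~G xe e.
Proof.
apply: fc_trans; first by apply: fc_rel; apply: (@LGr_vge l T (sg e) g1 e); rewrite actv1.
by rewrite cc1 acte1 phi1 fc_scale1 LG_er.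
Qed.

Lemma canon_fsum (ls : seq Ed) (F : Ed -> LEX) :
  canon (fsum ls F) = fsum ls (fun e => canon (F e)).
Proof. by elim: ls => //= e ls <-. Qed.

Lemma canon_rel (a b : LEX) : LE_rel a b -> canon a ~G canon b.
Proof.
case=> /=.
- exact: LG_vv.
- by move=> v w Hvw; apply: fc_rel; apply: LGr_vgwh0; rewrite actv1.
- exact: LG_se.
- exact: LG_er.
- exact: LG_rs.
- exact: LG_ss.
- by move=> e; apply: fc_rel; exact: LGr_ee.
- by move=> e f Hef; apply: fc_rel; exact: LGr_ef.
- by move=> v ls H; rewrite canon_fsum; apply: fc_rel; exact: LGr_CK2.
Qed.

Lemma canon_cong (a b : LEX) : a ~E b -> canon a ~G canon b.
Proof.
elim=> {a b} /=.
- exact: canon_rel.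
- by [].
- by move=> a b _ H; apply: fc_sym.
- by move=> a b c _ H1 _ H2; apply: fc_trans H1 H2.
- by move=> a a' b b' _ H1 _ H2; apply: fc_add.
- by move=> r a a' _ H; apply: fc_scale.
- by move=> a a' b b' _ H1 _ H2; apply: fc_mul.
all: by move=> *; constructor.
Qed.

Definition killed (a : LEX) := forall x, ckeq (rep (canon a) x) [::].

Lemma killed_cong a b : a ~E b -> killed a -> killed b.
Proof. move=> H Ha x. apply: ckeq_trans (Ha x). exact: rep_sound (canon_cong (fc_sym H)) x. Qed.
Lemma killed_mul a b : killed b -> killed (fmul a b).
Proof. move=> Hb x. have := rep_ckeq (canon a) (Hb x). by rewrite lin_nil. Qed.
Lemma killed_add a b : killed a -> killed b -> killed (fadd a b).
Proof. move=> Ha Hb x. exact: (ckeq_cat (Ha x) (Hb x)). Qed.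
Lemma killed_scale r a : killed a -> killed (fscale r a).
Proof. move=> Ha x. exact: (ckeq_scalec r (Ha x)). Qed.
Lemma killed_sub a b : canon a ~G canon b -> killed (fadd a (fscale (-1) b)).
Proof.
move=> H x. have Hs := rep_sound H x.
rewrite [rep _ _]/=.
apply: ckeq_trans; first exact: ckeq_cat Hs (ckeq_refl _).
apply: ceq_ckeq => y. rewrite coef_cat coef_scalec /=. ring.
Qed.

Definition homogeneous (F : comb) (s : Z) := forall p, List.In p F -> sdeg p.2 = s.

Lemma homogeneous_lin A F s s' : homogeneous F s ->
  (forall y, sdeg y = s -> homogeneous (A y) s') -> homogeneous (lin A F) s'.
Proof. move=> H1 H2 p /in_lin [q [p' [Hq Hp' ->]]] /=. exact: H2 (H1 _ Hq) _ Hp'. Qed.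
Lemma homogeneous_op_s e y : homogeneous (op_s e y) (Z.sub (sdeg y) 1).
Proof.
rewrite /op_s => p. case: decP => // _. case: (spath y) => [|f a].
  by case: decP => // _ [<-|].
by case: decP => // _ [<-|].
Qed.
Lemma homogeneous_op_vg v g y : homogeneous (op_vg v g y) (sdeg y).
Proof. by rewrite /op_vg => p; case: decP => // _ [<-|]. Qed.
Lemma homogeneous_gexp_s gs g y :
  homogeneous (rep (canon (gexp (LEs g) gs)) y) (Z.sub (sdeg y) (Z.of_nat (size gs).+1)).
Proof.
elim: gs g y => /= [|g' gs IH] g y; first by move=> p /homogeneous_op_s ->.
apply: homogeneous_lin; first exact: IH.
move=> z Hz p /homogeneous_op_s ->. rewrite Hz. lia.
Qed.
Lemma homogeneous_gexp_v gs w y :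
  homogeneous (rep (canon (gexp (LEv w) gs)) y) (Z.sub (sdeg y) (Z.of_nat (size gs))).
Proof.
case: gs => /= [|g gs]; first by move=> p /homogeneous_op_vg ->; lia.
apply: homogeneous_lin; first exact: homogeneous_gexp_s.
move=> z Hz p /homogeneous_op_vg ->. rewrite Hz. lia.
Qed.
Lemma coef_expandc_homogeneous D F s z : homogeneous F s -> sdeg z <> s -> coef (expandc D F) z = 0.
Proof.
move=> H Hz. rewrite /expandc coef_lin. elim: F H => //= p F IH H.
rewrite IH; last by move=> q Hq; apply: H; right.
rewrite coef_notin ?mulr0 ?addr0 // => q /expand_shape [Hq _ _ _ _] E. apply: Hz.
by rewrite -E Hq; apply: H; left.
Qed.

Lemma rep_gexp_s_strip (gs : seq Ed) (g : Ed) (p : seq Ed) (w : V) (h : G) (n : Z) : is_path p w -> (size gs < size p)%N ->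
  ceq (rep (canon (gexp (LEs g) gs)) (State p w h n))
      (if dec (exists rest, p = rev (g :: gs) ++ rest)
       then [:: (1, State (drop (size gs).+1 p) w h (Z.sub n (Z.of_nat (size gs).+1)))] else [::]).
Proof.
elim: gs g p w h n => [|g' gs IH] g p w h n Hv Hs.
  case: p Hv Hs => // f p Hv _. rewrite /= op_s_cons decT //.
  case: (decP (f = g)) => H.
    subst f. rewrite decT; last by exists p. by rewrite drop0.
  rewrite decF // => -[r [E _]]. by apply: H.
rewrite [rep _ _]/=. apply: ceq_trans; first apply: ceq_lin; first apply: IH => //.
  by apply: ltn_trans Hs.
case: decP => H1; last first.
  rewrite lin_nil decF // => -[r Hr]. apply: H1. exists (g :: r).
  by rewrite Hr (rev_cons g (g' :: gs)) cat_rcons.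
case: H1 => rest Hr.
have Hdr : drop (size gs).+1 p = rest by rewrite Hr drop_size_cat // size_rev.
rewrite Hdr.
have Hsz : size p = ((size gs).+1 + size rest)%N by rewrite Hr size_cat size_rev.
case: rest Hr Hdr Hsz => [|f rest'] Hr Hdr Hsz; first by move: Hs; rewrite Hsz /=; lia.
apply: ceq_trans; first exact: lin_single1.
have Hvr : is_path (f :: rest') w by rewrite Hr in Hv; apply: is_path_catr Hv.
rewrite op_s_cons decT //.
case: (decP (f = g)) => H.
  subst f. rewrite decT; last by exists rest'; rewrite Hr (rev_cons g (g' :: gs)) cat_rcons.
  have -> : drop (size gs).+2 p = rest'.
    rewrite Hr (_ : (size gs).+2 = size (rev (g' :: gs) ++ [:: g])); last by rewrite size_cat size_rev /=; lia.
    by rewrite -(cat1s g rest') catA drop_size_cat.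
  by have -> : Z.sub (Z.sub n (Z.of_nat (size gs).+1)) 1 = Z.sub n (Z.of_nat (size (g' :: gs)).+1) by rewrite /=; lia.
rewrite decF // => -[r Hr']. apply: H.
move: Hr'; rewrite Hr (rev_cons g (g' :: gs)) cat_rcons => E.
have := f_equal (drop (size (rev (g' :: gs)))) E. rewrite !drop_size_cat //. by case.
Qed.

(* Because c takes unit values, expansion never loses a state: some state in
   the expansion of a valid state has an invertible coefficient. *)
Lemma expand_unit_coef k (Y : state T) : valid Y -> exists z, [/\ sdeg z = sdeg Y,
  (exists b, spath z = spath Y ++ b) & exists u, coef (expand k Y) z * u = 1].
Proof.
elim: k Y => [|k IH] Y Hv.
  exists Y; split => //; first by exists [::]; rewrite cats0.
  by exists 1; rewrite /= decT // addr0 mulr1.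
rewrite /=. case: decP => Hx; last first.
  exists Y; split => //; first by exists [::]; rewrite cats0.
  by exists 1; rewrite /= decT // addr0 mulr1.
have [Hne [Hnd Hin]] := fib_enum (proj2 Hx).
case Hf: (fib (sbase Y)) Hne => [//|f0 L] _.
have Hf0 : List.In f0 (fib (sbase Y)) by rewrite Hf; left.
have [z [Hz1 [b Hb] [u Hu]]] := IH (extend Y f0) (valid_extend Hv Hf0).
have [u0 Hu0] := cc_unit (sgrp Y) f0.
exists z; split => //; first by exists (acte (sgrp Y) f0 :: b); rewrite Hb /extend /= -catA.
exists (u0 * u). rewrite -Hf coef_flat.
rewrite (@ssum_single _ _ _ _ f0) //.
  rewrite coef_scalec. transitivity ((cc (sgrp Y) f0 * u0) * (coef (expand k (extend Y f0)) z * u)); first by ring.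
  by rewrite Hu0 Hu mulr1.
move=> f Hfin Hne. rewrite coef_scalec coef_notin ?mulr0 //.
move=> p /expand_shape [_ _ [b' Hb'] _ _] E. apply: Hne.
move: Hb' Hb; rewrite E /extend /= => -> E2.
have := f_equal (drop (size (spath Y))) E2. rewrite -!catA !drop_size_cat //. case=> /acte_inj //.
Qed.

(* The monomials w gs^* are separated by the probe state (rev gs, w, 1, 0),
   which gs^* carries to the vertex state (w, 1, -|gs|) and every other
   monomial of the same length to zero. *)
Section GhostProbe.
Variables (w : V) (gs : seq Ed).
Hypothesis Hgs : ghost_path w gs.
Let probe := State (rev gs) w g1 Z0.
Let target := State [::] w g1 (Z.sub Z0 (Z.of_nat (size gs))).

Lemma rep_gexp_probe w' gs' : size gs' = size gs ->
  ceq (rep (canon (gexp (LEv w') gs')) probe)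
      (if dec (w' = w /\ gs' = gs) then [:: (1, target)] else [::]).
Proof.
case: gs' => [|g gs'] Hs.
  have Hnil : gs = [::] by case: gs Hgs Hs.
  rewrite /probe /target Hnil /= op_vg1 /ssrc /=.
  case: decP => H1; case: decP => H2 //.
  - by exfalso; apply: H2; case: H1.
  - by exfalso; apply: H1; case: H2.
rewrite [rep _ _]/=. apply: ceq_trans; first apply: ceq_lin; first apply: rep_gexp_s_strip.
- exact: ghost_path_rev.
- by rewrite size_rev -Hs.
case: decP => H1; last first.
  rewrite lin_nil decF // => -[_ E]. apply: H1. exists [::]. by rewrite cats0 E.
case: H1 => rest Hr.
have Hrest : rest = [::].
  have := f_equal size Hr. rewrite size_cat !size_rev -Hs. by case: rest {Hr} => //= ? ?; lia.
subst rest. rewrite cats0 in Hr. have Hgg : g :: gs' = gs by rewrite -(revK gs) Hr revK.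
apply: ceq_trans; first exact: lin_single1.
rewrite op_vg1 /ssrc /= drop_oversize ?size_rev -?Hs //.
case: decP => H2; case: decP => H3 //.
- by rewrite /target -Hs.
- by exfalso; apply: H3; case: H2 => _ ->.
- by exfalso; apply: H2; split => //; case: H3.
Qed.

Lemma coef_expandc_gexp_probe D w' gs' z : sdeg z = sdeg target ->
  coef (expandc D (rep (canon (gexp (LEv w') gs')) probe)) z =
  if dec (Mo [::] w' gs' = Mo [::] w gs) then coef (expand D target) z else 0.
Proof.
move=> Hz. case: (eqVneq (size gs') (size gs)) => Hs.
  rewrite (ceq_lin _ (rep_gexp_probe w' Hs)).
  case: decP => H1; case: decP => H2.
  - by rewrite /expandc lin_single1 /expand_to /= subn0.
  - by exfalso; apply: H2; case: H1 => -> ->.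
  - by exfalso; apply: H1; case: H2 => -> ->.
  - by [].
rewrite decF; last by case=> _ E; move: Hs; rewrite E eqxx.
apply: coef_expandc_homogeneous; first exact: homogeneous_gexp_v.
rewrite Hz /target /probe /=. move/eqP: Hs. lia.
Qed.

Lemma coef_expandc_lcsum_probe D z (L : lcomb) : (forall p, List.In p L -> mpath p.2 = [::]) ->
  sdeg z = sdeg target ->
  coef (expandc D (rep (canon (lcsum L)) probe)) z = coef L (Mo [::] w gs) * coef (expand D target) z.
Proof.
move=> HL Hz. elim: L HL => /= [|[r m] L IH] HL; first by rewrite mul0r.
rewrite /expandc lin_cat coef_cat (lin_scalec _ _ _ z) coef_scalec -/(expandc D _) IH; last first.
  by move=> p Hp; apply: HL; right.
have Hm : mpath m = [::] by apply: (HL (r, m)); left.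
clear HL; case: m Hm => a w' gs' /= ->. rewrite /mexp /= coef_expandc_gexp_probe //.
case: decP => H; rewrite ?mulr0 ?add0r //. ring.
Qed.

Lemma killed_ghost_coef0 (L : lcomb) : (forall p, List.In p L -> mpath p.2 = [::]) ->
  killed (lcsum L) -> coef L (Mo [::] w gs) = 0.
Proof.
move=> HL HZ. have [D HD] := HZ probe.
have [z [Hz _ [u Hu]]] := @expand_unit_coef D target I.
have := HD z. rewrite coef_expandc_lcsum_probe // /expandc lin_nil /= => H0.
by rewrite -[coef _ _]mulr1 -Hu mulrA H0 mul0r.
Qed.

End GhostProbe.

Lemma killed_ghost_eq0 (L : lcomb) : (forall p, List.In p L -> mpath p.2 = [::]) ->
  killed (lcsum L) -> lcsum L ~E fzero.
Proof.
move=> Hall HZ. apply: fcomb_eq0 => p Hp.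
case Hm: p.2 => [a w gs]. have Ha : a = [::] by rewrite -(Hall p Hp) Hm.
subst a. case: (classic (ghost_path w gs)) => Hg; last by right; exact: gexp_eq0.
by left; rewrite -Hm; have := killed_ghost_coef0 Hg Hall HZ; rewrite Hm.
Qed.

Lemma killed_ghost_lcmul_s_eq0 e (L : lcomb) :
  (forall p, List.In p L -> mpath p.2 = [::] /\ mvert p.2 = sg e) ->
  killed (lcsum (lcmul_s e L)) -> lcsum L ~E fzero.
Proof.
move=> Hall HZ. apply: fcomb_eq0 => p Hp.
case Hm: p.2 => [a w gs]. have [Ha Hw] := Hall p Hp. rewrite Hm /= in Ha Hw. subst a w.
case: (classic (ghost_path (sg e) gs)) => Hg; last by right; exact: gexp_eq0.
left. rewrite -(coef_lcmul_s_vertex gs Hall).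
apply: (@killed_ghost_coef0 (rg e) (e :: gs)) => //.
move=> q /List.in_map_iff [p' [<- Hp']] /=. by have [-> _] := Hall p' Hp'.
Qed.

Section InductionStep.
Variable n : nat.
Hypothesis IHn : forall L : lcomb, (weight L <= n)%N -> killed (lcsum L) -> lcsum L ~E fzero.

Lemma ee_lcsum_eq0 e (L : lcomb) p0 : List.In p0 L -> mpath p0.2 <> [::] -> (weight L <= n.+1)%N ->
  killed (fmul (vs e) (lcsum L)) -> fmul (ve e) (fmul (vs e) (lcsum L)) ~E fzero.
Proof.
move=> Hp0 Hne Hw HZ. rewrite mul_s_lcsum IHn ?fmul0r //.
  by have := weight_lcmul_s_lt e Hp0 Hne; lia.
exact: killed_cong (mul_s_lcsum e L) HZ.
Qed.

Lemma step_regular v (L : lcomb) p0 : regular v -> (forall p, List.In p L -> v = msrc p.2) ->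
  List.In p0 L -> mpath p0.2 <> [::] -> (weight L <= n.+1)%N -> killed (lcsum L) ->
  lcsum L ~E fzero.
Proof.
move=> Hreg Hv Hp0 Hne Hw HZ.
have -> : lcsum L ~E fmul (vv v) (lcsum L) by rewrite mul_v_lcsum lcmul_v_id.
rewrite {1}(fc_rel (LEr_CK2 l (fib_enum Hreg))) fsum_mull.
apply: fsum0 => e _. rewrite -fc_mulA. apply: ee_lcsum_eq0 Hp0 Hne Hw _.
exact: killed_mul.
Qed.

(* At a singular v some edge e from v starts none of the paths, so e^* kills
   the terms with real paths and turns each v gs^* into r(e) (e gs)^*: the
   ghost part vanishes by the probe argument, and the rest is recovered as
   sum_f f f^* L1 over the first edges f. *)
Lemma step_singular v (L : lcomb) p0 : ~ regular v -> (forall p, List.In p L -> v = msrc p.2) ->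
  List.In p0 L -> mpath p0.2 <> [::] -> (weight L <= n.+1)%N -> killed (lcsum L) ->
  lcsum L ~E fzero.
Proof.
move=> Hreg Hv Hp0 Hne Hw HZ.
set L0 := filter ghost_only L; set L1 := filter (predC ghost_only) L.
have HL : lcsum L ~E fadd (lcsum L0) (lcsum L1) by exact: fcomb_filter.
have HL1 : forall p, List.In p L1 -> mpath p.2 <> [::].
  by move=> p /In_filter [_]; rewrite /ghost_only /=; case: (mpath p.2).
have Hfirst : forall f, List.In f (first_edges L1) -> sg f = v.
  move=> f /first_edgesP [p [a [/In_filter [Hp _] Hma]]].
  by have := Hv p Hp; rewrite /msrc Hma /= => ->.
have [e0 He0] : exists e0, sg e0 = v.
  case Hm: (mpath p0.2) Hne => [//|e0 a] _. exists e0. by have := Hv _ Hp0; rewrite /msrc Hm.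
have [e [He Hnin]] := singular_fresh_edge Hreg He0 Hfirst.
have HL0 : lcsum L0 ~E fzero.
  apply: (@killed_ghost_lcmul_s_eq0 e).
    move=> q /In_filter [Hq]. rewrite /ghost_only. case Hq2: (mpath q.2) => // _.
    by split => //; have := Hv q Hq; rewrite /msrc Hq2 /= He => ->.
  apply: (@killed_cong (fmul (vs e) (lcsum L))); last exact: killed_mul.
  by rewrite HL fc_mulDr !mul_s_lcsum (lcmul_s_fresh_eq0 Hnin HL1) fadd0.
have HZ1 : killed (lcsum L1) by apply: (killed_cong _ HZ); rewrite HL HL0 fc_add0.
have Hw1 : (weight L1 <= n.+1)%N by have := weight_filter ghost_only L; rewrite -/L0 -/L1; lia.
have Hp01 : List.In p0 L1 by apply/In_filter; split => //; rewrite /ghost_only /=; case: (mpath p0.2) Hne.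
rewrite HL HL0 fc_add0 -(@fsum_ee_lcsum _ _ (nodupP (first_edges L1)) L1); last 2 first.
- exact: NoDup_nodupP.
- move=> p Hp. case Hma: (mpath p.2) (HL1 p Hp) => [//|f a] _.
  by exists f, a; split => //; rewrite nodupP_In; exact: first_edges_In Hp Hma.
apply: fsum0 => f _. apply: (ee_lcsum_eq0 Hp01 (HL1 _ Hp01) Hw1).
exact: killed_mul.
Qed.

(* The terms with source v = s(e_0) form v L, hence are killed; so are the
   others, which weigh less and vanish by induction. *)
Lemma killed_lcsum_step (L : lcomb) p0 : List.In p0 L -> mpath p0.2 <> [::] ->
  (weight L <= n.+1)%N -> killed (lcsum L) -> lcsum L ~E fzero.
Proof.
move=> Hp0 Hne Hw HZ.
case Hm0: (mpath p0.2) Hne => [//|e0 a0] Hne.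
pose v := sg e0; pose P := fun p : l * mono E => dec (v = msrc p.2).
set Ly := filter P L; set Lr := filter (predC P) L.
have HL : lcsum L ~E fadd (lcsum Ly) (lcsum Lr) by exact: fcomb_filter.
have Hp0y : List.In p0 Ly by apply/In_filter; split => //; rewrite /P decT // /msrc Hm0.
have Hwy := weight_In Hp0y; rewrite Hm0 /= in Hwy.
have HZy : killed (lcsum Ly).
  apply: (@killed_cong (fmul (vv v) (lcsum L))); last exact: killed_mul.
  by rewrite mul_v_lcsum lcmul_v_filter.
have HZr : killed (lcsum Lr).
  apply: (@killed_cong (fadd (lcsum L) (fscale (-1) (lcsum Ly)))).
    by rewrite HL faddKr.
  by apply: killed_add => //; apply: killed_scale.
have Hsplit := weight_filter P L; rewrite -/Ly -/Lr in Hsplit.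
have HLr : lcsum Lr ~E fzero by apply: IHn => //; lia.
rewrite HL HLr fadd0.
have Hv : forall p, List.In p Ly -> v = msrc p.2 by move=> p /In_filter [_]; rewrite /P; case: decP.
have Hwy' : (weight Ly <= n.+1)%N by lia.
case: (classic (regular v)) => Hreg.
- by apply: step_regular Hreg Hv Hp0y _ Hwy' HZy; rewrite Hm0.
- by apply: step_singular Hreg Hv Hp0y _ Hwy' HZy; rewrite Hm0.
Qed.

End InductionStep.

Lemma killed_lcsum_eq0 n (L : lcomb) : (weight L <= n)%N -> killed (lcsum L) -> lcsum L ~E fzero.
Proof.
elim: n L => [|n IH] L Hw HZ.
  apply: killed_ghost_eq0 => // p Hp. have := weight_In Hp. case: (mpath p.2) => //= f a. lia.
case: (classic (exists p, List.In p L /\ mpath p.2 <> [::])) => [[p0 [Hp0 Hne]]|Hall].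
  exact: (killed_lcsum_step IH) Hp0 Hne Hw HZ.
apply: killed_ghost_eq0 => // p Hp. apply: NNPP => Hne. apply: Hall. by exists p.
Qed.

Lemma killed_eq0 (a : LEX) : killed a -> a ~E fzero.
Proof.
have [L HL] := normal_form a. move=> HZ.
rewrite HL; apply: (@killed_lcsum_eq0 (weight L)) => //.
exact: killed_cong HL HZ.
Qed.

End Faithfulness.

Theorem proposition3p9 (l : comPzRingType) (T : twisted_EP l)
  (a b : fexpr l (LE_gen (epE T))) :
  fcong (@LE_rel l (epE T)) a b <-> fcong (@LG_rel l T) (@canon l T a) (@canon l T b).
Proof.
split; first exact: canon_cong.
by move=> H; apply: fsub0_eq; apply: killed_eq0; apply: killed_sub.
Qed.
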